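(* Let $J\in\mathbb{R}^{3\times3}$ be symmetric positive definite, and let $R_d:[0,\infty)\to\mathsf{SO(3)}$ be a $C^2$ attitude command with $\dot R_d=R_d\hat\Omega_d$. Let $k_R,k_\Omega>0$ and define the control $$u=-k_Re_R-k_\Omega e_\Omega+\Omega\times J\Omega-J\big(\hat\Omega R^TR_d\Omega_d-R^TR_d\dot\Omega_d\big).$$ Consider the closed-loop system $J\dot\Omega+\Omega\times J\Omega=u$, $\dot R=R\hat\Omega$. If the initial condition satisfies $$\Psi(R(0),R_d(0))<2,\qquad \|e_\Omega(0)\|^2<\frac{2k_R}{\lambda_{\max}(J)}\big(2-\Psi(R(0),R_d(0))\big),$$ then $\Psi(R(t),R_d(t))<2$ for all $t\ge0$ (so $e_R$ remains well defined), and the zero equilibrium $(e_R,e_\Omega)=(0,0)$ is exponentially stable with this set contained in its region of attraction: there exist constants $C,\beta>0$ (depending on $J,k_R,k_\Omega$) such that $$\|e_R(t)\|^2+\|e_\Omega(t)\|^2\le C\big(\|e_R(0)\|^2+\|e_\Omega(0)\|^2\big)e^{-\beta t}\quad\text{for all }t\ge0.$$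
   Context: $\mathsf{SO(3)}$ is the group of $3\times3$ rotation matrices; $\hat x$ denotes the skew-symmetric matrix with $\hat x y=x\times y$, and $\vee$ is its inverse. $\Psi(R,R_d)=2-\sqrt{1+\mathrm{tr}(R_d^TR)}$, $e_R=\frac{1}{2\sqrt{1+\mathrm{tr}(R_d^TR)}}(R_d^TR-R^TR_d)^\vee$ (defined when $\Psi<2$), and $e_\Omega=\Omega-R^TR_d\Omega_d$. $\lambda_{\max}(J)$ is the largest eigenvalue of $J$. *)

From Stdlib Require Import Reals Lra.
Open Scope R_scope.

Record vec : Type := mkV { v1 : R; v2 : R; v3 : R }.
Record mat : Type := mkM {
  m11 : R; m12 : R; m13 : R;
  m21 : R; m22 : R; m23 : R;
  m31 : R; m32 : R; m33 : R }.

Definition vadd (a b : vec) : vec := mkV (v1 a + v1 b) (v2 a + v2 b) (v3 a + v3 b).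
Definition vopp (a : vec) : vec := mkV (- v1 a) (- v2 a) (- v3 a).
Definition vsub (a b : vec) : vec := vadd a (vopp b).
Definition vscale (c : R) (a : vec) : vec := mkV (c * v1 a) (c * v2 a) (c * v3 a).
Definition vzero : vec := mkV 0 0 0.
Definition dot (a b : vec) : R := v1 a * v1 b + v2 a * v2 b + v3 a * v3 b.
Definition vnorm (a : vec) : R := sqrt (dot a a).
Definition cross (a b : vec) : vec :=
  mkV (v2 a * v3 b - v3 a * v2 b)
      (v3 a * v1 b - v1 a * v3 b)
      (v1 a * v2 b - v2 a * v1 b).

Definition mT (A : mat) : mat :=
  mkM (m11 A) (m21 A) (m31 A)
      (m12 A) (m22 A) (m32 A)
      (m13 A) (m23 A) (m33 A).
Definition mmul (A B : mat) : mat :=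
  mkM (m11 A * m11 B + m12 A * m21 B + m13 A * m31 B)
      (m11 A * m12 B + m12 A * m22 B + m13 A * m32 B)
      (m11 A * m13 B + m12 A * m23 B + m13 A * m33 B)
      (m21 A * m11 B + m22 A * m21 B + m23 A * m31 B)
      (m21 A * m12 B + m22 A * m22 B + m23 A * m32 B)
      (m21 A * m13 B + m22 A * m23 B + m23 A * m33 B)
      (m31 A * m11 B + m32 A * m21 B + m33 A * m31 B)
      (m31 A * m12 B + m32 A * m22 B + m33 A * m32 B)
      (m31 A * m13 B + m32 A * m23 B + m33 A * m33 B).
Definition msub (A B : mat) : mat :=
  mkM (m11 A - m11 B) (m12 A - m12 B) (m13 A - m13 B)
      (m21 A - m21 B) (m22 A - m22 B) (m23 A - m23 B)
      (m31 A - m31 B) (m32 A - m32 B) (m33 A - m33 B).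
Definition mvmul (A : mat) (x : vec) : vec :=
  mkV (m11 A * v1 x + m12 A * v2 x + m13 A * v3 x)
      (m21 A * v1 x + m22 A * v2 x + m23 A * v3 x)
      (m31 A * v1 x + m32 A * v2 x + m33 A * v3 x).
Definition mid : mat := mkM 1 0 0 0 1 0 0 0 1.
Definition trace (A : mat) : R := m11 A + m22 A + m33 A.
Definition det (A : mat) : R :=
  m11 A * (m22 A * m33 A - m23 A * m32 A)
  - m12 A * (m21 A * m33 A - m23 A * m31 A)
  + m13 A * (m21 A * m32 A - m22 A * m31 A).

(* hat map: hat x y = x × y *)
Definition hat (x : vec) : mat :=
  mkM 0 (- v3 x) (v2 x)
      (v3 x) 0 (- v1 x)
      (- v2 x) (v1 x) 0.
(* vee map: inverse of hat on skew-symmetric matrices *)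
Definition vee (A : mat) : vec := mkV (m32 A) (m13 A) (m21 A).

Definition SO3 (A : mat) : Prop := mmul (mT A) A = mid /\ det A = 1.

Definition symmetric (J : mat) : Prop := mT J = J.
Definition posdef (J : mat) : Prop :=
  forall x : vec, x <> vzero -> 0 < dot x (mvmul J x).
Definition is_eigenvalue (J : mat) (l : R) : Prop :=
  exists v : vec, v <> vzero /\ mvmul J v = vscale l v.
Definition is_lambda_max (J : mat) (l : R) : Prop :=
  is_eigenvalue J l /\ forall l', is_eigenvalue J l' -> l' <= l.

Definition Psi (Rm Rd : mat) : R := 2 - sqrt (1 + trace (mmul (mT Rd) Rm)).
Definition eR (Rm Rd : mat) : vec :=
  vscale (/ (2 * sqrt (1 + trace (mmul (mT Rd) Rm))))
         (vee (msub (mmul (mT Rd) Rm) (mmul (mT Rm) Rd))).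
Definition eW (Rm : mat) (W : vec) (Rd : mat) (Wd : vec) : vec :=
  vsub W (mvmul (mmul (mT Rm) Rd) Wd).

Definition control (J : mat) (kR kW : R) (Rm : mat) (W : vec)
    (Rd : mat) (Wd dWd : vec) : vec :=
  vsub (vadd (vadd (vscale (- kR) (eR Rm Rd)) (vscale (- kW) (eW Rm W Rd Wd)))
             (cross W (mvmul J W)))
       (mvmul J (vsub (mvmul (hat W) (mvmul (mmul (mT Rm) Rd) Wd))
                      (mvmul (mmul (mT Rm) Rd) dWd))).

Definition vec_deriv_at (f : R -> vec) (t : R) (d : vec) : Prop :=
  derivable_pt_lim (fun s => v1 (f s)) t (v1 d) /\
  derivable_pt_lim (fun s => v2 (f s)) t (v2 d) /\
  derivable_pt_lim (fun s => v3 (f s)) t (v3 d).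

Definition mat_deriv_at (f : R -> mat) (t : R) (d : mat) : Prop :=
  derivable_pt_lim (fun s => m11 (f s)) t (m11 d) /\
  derivable_pt_lim (fun s => m12 (f s)) t (m12 d) /\
  derivable_pt_lim (fun s => m13 (f s)) t (m13 d) /\
  derivable_pt_lim (fun s => m21 (f s)) t (m21 d) /\
  derivable_pt_lim (fun s => m22 (f s)) t (m22 d) /\
  derivable_pt_lim (fun s => m23 (f s)) t (m23 d) /\
  derivable_pt_lim (fun s => m31 (f s)) t (m31 d) /\
  derivable_pt_lim (fun s => m32 (f s)) t (m32 d) /\
  derivable_pt_lim (fun s => m33 (f s)) t (m33 d).

Definition vec_continuous (f : R -> vec) : Prop :=
  continuity (fun s => v1 (f s)) /\ continuity (fun s => v2 (f s)) /\
  continuity (fun s => v3 (f s)).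

Definition rcont0 (g : R -> R) : Prop :=
  forall eps, 0 < eps -> exists delta, 0 < delta /\
    forall s, 0 <= s < delta -> Rabs (g s - g 0) < eps.

Definition vec_rcont0 (f : R -> vec) : Prop :=
  rcont0 (fun s => v1 (f s)) /\ rcont0 (fun s => v2 (f s)) /\
  rcont0 (fun s => v3 (f s)).

Definition mat_rcont0 (f : R -> mat) : Prop :=
  rcont0 (fun s => m11 (f s)) /\ rcont0 (fun s => m12 (f s)) /\
  rcont0 (fun s => m13 (f s)) /\ rcont0 (fun s => m21 (f s)) /\
  rcont0 (fun s => m22 (f s)) /\ rcont0 (fun s => m23 (f s)) /\
  rcont0 (fun s => m31 (f s)) /\ rcont0 (fun s => m32 (f s)) /\
  rcont0 (fun s => m33 (f s)).

(* Desired attitude command: Rd : R -> SO(3), C^2, with dRd = Rd hat(Wd),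
   dWd the (continuous) derivative of Wd. *)
Definition attitude_command (Rd : R -> mat) (Wd dWd : R -> vec) : Prop :=
  (forall t, SO3 (Rd t)) /\
  (forall t, mat_deriv_at Rd t (mmul (Rd t) (hat (Wd t)))) /\
  (forall t, vec_deriv_at Wd t (dWd t)) /\
  vec_continuous dWd.

(* (Rm, W) is a solution on [0,oo) of the closed loop
   J dW + W x J W = u,  dRm = Rm hat W,
   continuous on [0,oo), differentiable on (0,oo), with Rm(0) in SO(3). *)
Definition closed_loop_solution (J : mat) (kR kW : R)
    (Rd : R -> mat) (Wd dWd : R -> vec) (Rm : R -> mat) (W : R -> vec) : Prop :=
  SO3 (Rm 0) /\ mat_rcont0 Rm /\ vec_rcont0 W /\
  (forall t, 0 < t -> mat_deriv_at Rm t (mmul (Rm t) (hat (W t)))) /\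
  (forall t, 0 < t -> exists dW : vec, vec_deriv_at W t dW /\
      vadd (mvmul J dW) (cross (W t) (mvmul J (W t)))
      = control J kR kW (Rm t) (W t) (Rd t) (Wd t) (dWd t)).

From Stdlib Require Import Reals Lra Psatz FunctionalExtensionality Classical ClassicalEpsilon.
Open Scope R_scope.

(* With [Q = Rd^T R], [V1 = eW . J eW / 2 + kR Psi] satisfies
   [V1' = - kW |eW|^2] as long as [Psi < 2]; the hypothesis on the initial data
   says [V1 0 < 2 kR], and since [kR Psi <= V1 <= V1 0] the trajectory can never
   reach the set [Psi = 2] (a continuity argument at the first exit time).  On
   [Psi < 2] one has [Psi / 2 <= |eR|^2 <= Psi] and [|eR'| <= |eW| / 2], so for a
   small weight [eps] the function [V2 = V1 + eps eR . J eW] is comparable to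
   [|eR|^2 + |eW|^2] and satisfies [V2' <= - beta V2], whence exponential decay.
   The constants only depend on [J] through its largest and smallest eigenvalues
   and a bound on its norm; the smallest eigenvalue is bounded away from 0
   because the characteristic polynomial does not vanish near 0. *)

(** * Matrix algebra and SO(3) *)

Definition madd (A B : mat) : mat :=
  mkM (m11 A + m11 B) (m12 A + m12 B) (m13 A + m13 B)
      (m21 A + m21 B) (m22 A + m22 B) (m23 A + m23 B)
      (m31 A + m31 B) (m32 A + m32 B) (m33 A + m33 B).
Definition mscale (c : R) (A : mat) : mat :=
  mkM (c * m11 A) (c * m12 A) (c * m13 A) (c * m21 A) (c * m22 A) (c * m23 A)
      (c * m31 A) (c * m32 A) (c * m33 A).
Definition mzero : mat := mkM 0 0 0 0 0 0 0 0 0.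
Definition cof (M : mat) : mat :=
  mkM (m22 M * m33 M - m23 M * m32 M) (m23 M * m31 M - m21 M * m33 M) (m21 M * m32 M - m22 M * m31 M)
      (m13 M * m32 M - m12 M * m33 M) (m11 M * m33 M - m13 M * m31 M) (m12 M * m31 M - m11 M * m32 M)
      (m12 M * m23 M - m13 M * m22 M) (m13 M * m21 M - m11 M * m23 M) (m11 M * m22 M - m12 M * m21 M).
Definition outer (a b : vec) : mat :=
  mkM (v1 a * v1 b) (v1 a * v2 b) (v1 a * v3 b)
      (v2 a * v1 b) (v2 a * v2 b) (v2 a * v3 b)
      (v3 a * v1 b) (v3 a * v2 b) (v3 a * v3 b).

Ltac mat_unfold :=
  cbv beta iota delta [vee hat mvmul mmul msub mT mscale madd mzero cof mid trace det
    cross dot vadd vopp vsub vscale vzero outer m11 m12 m13 m21 m22 m23 m31 m32 m33 v1 v2 v3] in *.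

Ltac mat_ring :=
  repeat match goal with M : mat |- _ => destruct M | v : vec |- _ => destruct v end;
  mat_unfold; lazymatch goal with |- @eq R _ _ => ring | _ => f_equal; ring end.

Lemma mat_ext (A B : mat) :
  m11 A = m11 B -> m12 A = m12 B -> m13 A = m13 B ->
  m21 A = m21 B -> m22 A = m22 B -> m23 A = m23 B ->
  m31 A = m31 B -> m32 A = m32 B -> m33 A = m33 B -> A = B.
Proof. destruct A, B; cbn; intros; subst; reflexivity. Qed.

Lemma vec_ext (a b : vec) : v1 a = v1 b -> v2 a = v2 b -> v3 a = v3 b -> a = b.
Proof. destruct a, b; cbn; intros; subst; reflexivity. Qed.

Ltac mat_components H :=
  pose proof (f_equal m11 H); pose proof (f_equal m12 H); pose proof (f_equal m13 H);
  pose proof (f_equal m21 H); pose proof (f_equal m22 H); pose proof (f_equal m23 H);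
  pose proof (f_equal m31 H); pose proof (f_equal m32 H); pose proof (f_equal m33 H).

Lemma mmulA A B C : mmul A (mmul B C) = mmul (mmul A B) C.
Proof. mat_ring. Qed.
Lemma mmul1l A : mmul mid A = A.
Proof. mat_ring. Qed.
Lemma mmul1r A : mmul A mid = A.
Proof. mat_ring. Qed.
Lemma mmul_maddr A B C : mmul A (madd B C) = madd (mmul A B) (mmul A C).
Proof. mat_ring. Qed.
Lemma mmul_mscaler A k B : mmul A (mscale k B) = mscale k (mmul A B).
Proof. mat_ring. Qed.
Lemma mscale1 A : mscale 1 A = A.
Proof. mat_ring. Qed.
Lemma mTK A : mT (mT A) = A.
Proof. mat_ring. Qed.
Lemma mT_mmul A B : mT (mmul A B) = mmul (mT B) (mT A).
Proof. mat_ring. Qed.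
Lemma det_mT A : det (mT A) = det A.
Proof. mat_ring. Qed.
Lemma det_mmul A B : det (mmul A B) = det A * det B.
Proof. mat_ring. Qed.
Lemma mmul_cofT M : mmul M (mT (cof M)) = mscale (det M) mid.
Proof. mat_ring. Qed.
Lemma mmul_cofTl M : mmul (mT (cof M)) M = mscale (det M) mid.
Proof. mat_ring. Qed.
Lemma mvmul_mmul A B x : mvmul (mmul A B) x = mvmul A (mvmul B x).
Proof. mat_ring. Qed.
Lemma mvmul1 x : mvmul mid x = x.
Proof. mat_ring. Qed.
Lemma mvmul_mscale k A x : mvmul (mscale k A) x = vscale k (mvmul A x).
Proof. mat_ring. Qed.
Lemma mvmul_hat w y : mvmul (hat w) y = cross w y.
Proof. mat_ring. Qed.

Lemma cayley_hamilton M :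
  mmul M (mmul M M) =
  madd (mscale (trace M) (mmul M M))
       (madd (mscale (- trace (cof M)) M) (mscale (det M) mid)).
Proof. mat_ring. Qed.

Lemma SO3_cof Q : SO3 Q -> cof Q = Q.
Proof.
  intros [HQ Hdet].
  assert (E : mT (cof Q) = mT Q).
  { rewrite <- (mmul1l (mT (cof Q))), <- HQ, <- mmulA, mmul_cofT, Hdet,
      mscale1, mmul1r. reflexivity. }
  rewrite <- (mTK (cof Q)), E, mTK. reflexivity.
Qed.

Lemma SO3_mmul_mT Q : SO3 Q -> mmul Q (mT Q) = mid.
Proof.
  intros HQ. rewrite <- (SO3_cof Q HQ) at 2.
  destruct HQ as [_ Hdet]. rewrite mmul_cofT, Hdet, mscale1. reflexivity.
Qed.

Lemma SO3_mT_mmul A B : SO3 A -> SO3 B -> SO3 (mmul (mT A) B).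
Proof.
  intros HA HB. pose proof (SO3_mmul_mT A HA) as EA.
  destruct HA as [_ HA], HB as [HB1 HB2]. split.
  - rewrite mT_mmul, mTK, <- mmulA, (mmulA A), EA, mmul1l. exact HB1.
  - rewrite det_mmul, det_mT, HA, HB2. ring.
Qed.

(* Cayley-Hamilton, multiplied by Q^T, using cof Q = Q and det Q = 1. *)
Lemma SO3_sqr Q : SO3 Q ->
  mmul Q Q = madd (mscale (trace Q) Q) (madd (mscale (- trace Q) mid) (mT Q)).
Proof.
  intros HQ. pose proof (f_equal (mmul (mT Q)) (cayley_hamilton Q)) as E.
  pose proof (SO3_cof Q HQ) as Hc. destruct HQ as [H1 H2]. cbv beta in E.
  rewrite !mmul_maddr, !mmul_mscaler, !mmulA, H1, !mmul1l, mmul1r, Hc, H2, mscale1 in E.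
  exact E.
Qed.

Lemma SO3_vee_outer Q : SO3 Q ->
  outer (vee (msub Q (mT Q))) (vee (msub Q (mT Q))) =
  mscale (1 + trace Q) (msub (madd Q (mT Q)) (mscale (trace Q - 1) mid)).
Proof.
  intros HQ. pose proof (SO3_sqr Q HQ) as E1. pose proof (SO3_mmul_mT Q HQ) as E2.
  destruct HQ as [E3 _]. destruct Q. mat_unfold.
  mat_components E1. mat_components E2. mat_components E3. cbn in *.
  apply mat_ext; cbn; lra.
Qed.

Lemma SO3_vee_norm Q : SO3 Q ->
  dot (vee (msub Q (mT Q))) (vee (msub Q (mT Q))) = (1 + trace Q) * (3 - trace Q).
Proof.
  intros HQ. pose proof (SO3_vee_outer Q HQ) as K. mat_components K.
  destruct Q. mat_unfold. cbn in *. lra.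
Qed.

Lemma dotC a b : dot a b = dot b a.
Proof. mat_ring. Qed.
Lemma dot_vscalel k a b : dot (vscale k a) b = k * dot a b.
Proof. mat_ring. Qed.
Lemma dot_vscale_vscale k a : dot (vscale k a) (vscale k a) = k * k * dot a a.
Proof. mat_ring. Qed.
Lemma vscaleA a b v : vscale (a * b) v = vscale a (vscale b v).
Proof. mat_ring. Qed.

Lemma dot_ge0 a : 0 <= dot a a.
Proof. destruct a as [x y z]; unfold dot; cbn. nra. Qed.

Lemma dot_gt0 v : v <> vzero -> 0 < dot v v.
Proof.
  intros Hv. destruct v as [x y z]. unfold dot; cbn.
  destruct (Req_dec x 0), (Req_dec y 0), (Req_dec z 0); subst;
    [ now exfalso; apply Hv | nra .. ].
Qed.

Lemma vnorm_sqr x : vnorm x ^ 2 = dot x x.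
Proof. unfold vnorm. rewrite <- Rsqr_pow2. apply Rsqr_sqrt, dot_ge0. Qed.

Lemma dot_le_half_sum a b : 2 * dot a b <= dot a a + dot b b.
Proof.
  pose proof (dot_ge0 (vsub a b)).
  assert (dot (vsub a b) (vsub a b) = dot a a + dot b b - 2 * dot a b) by mat_ring. lra.
Qed.

Lemma dot_ge_neg_weighted a b p q : - (2 * p * q * dot a b) <= p * p * dot a a + q * q * dot b b.
Proof.
  pose proof (dot_ge0 (vadd (vscale p a) (vscale q b))).
  assert (dot (vadd (vscale p a) (vscale q b)) (vadd (vscale p a) (vscale q b))
          = p * p * dot a a + q * q * dot b b + 2 * p * q * dot a b) by mat_ring.
  lra.
Qed.

Lemma dot_vadd_vscaler a b c kb kc :
  dot a (vadd (vscale kb b) (vscale kc c)) = kb * dot a b + kc * dot a c.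
Proof. mat_ring. Qed.

Lemma mvmul_sym_dot J a b : symmetric J -> dot a (mvmul J b) = dot (mvmul J a) b.
Proof.
  intros Hs. destruct J. unfold symmetric, mT in Hs. cbn in Hs.
  injection Hs; intros; subst. mat_ring.
Qed.

Definition frob2 (J : mat) : R :=
  m11 J^2 + m12 J^2 + m13 J^2 + m21 J^2 + m22 J^2 + m23 J^2 + m31 J^2 + m32 J^2 + m33 J^2.

Lemma frob2_ge0 J : 0 <= frob2 J.
Proof. unfold frob2. repeat apply Rplus_le_le_0_compat; apply pow2_ge_0. Qed.

(* Cauchy-Schwarz row by row. *)
Lemma mvmul_dot_le J x : dot (mvmul J x) (mvmul J x) <= frob2 J * dot x x.
Proof.
  unfold frob2.
  destruct J, x; unfold dot, mvmul; cbn.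
  assert (CS : forall p q r u v w,
    (p*u + q*v + r*w)^2 <= (p^2 + q^2 + r^2) * (u*u + v*v + w*w)).
  { intros. assert ((p^2 + q^2 + r^2) * (u*u + v*v + w*w) - (p*u + q*v + r*w)^2
      = (q*w - r*v)^2 + (r*u - p*w)^2 + (p*v - q*u)^2) by ring.
    pose proof (pow2_ge_0 (q*w - r*v)); pose proof (pow2_ge_0 (r*u - p*w));
    pose proof (pow2_ge_0 (p*v - q*u)). lra. }
  pose proof (CS m11 m12 m13 v1 v2 v3); pose proof (CS m21 m22 m23 v1 v2 v3);
  pose proof (CS m31 m32 m33 v1 v2 v3). lra.
Qed.


(** * Derivatives, right-continuity at 0, monotonicity *)

Lemma D_ext f t l l' : derivable_pt_lim f t l -> l = l' -> derivable_pt_lim f t l'.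
Proof. intros H ->; exact H. Qed.
Lemma D_const c t : derivable_pt_lim (fun _ => c) t 0.
Proof. apply derivable_pt_lim_const. Qed.
Lemma D_id t : derivable_pt_lim (fun s => s) t 1.
Proof. apply derivable_pt_lim_id. Qed.
Lemma D_plus f g t a b : derivable_pt_lim f t a -> derivable_pt_lim g t b ->
  derivable_pt_lim (fun s => f s + g s) t (a + b).
Proof. apply derivable_pt_lim_plus. Qed.
Lemma D_minus f g t a b : derivable_pt_lim f t a -> derivable_pt_lim g t b ->
  derivable_pt_lim (fun s => f s - g s) t (a - b).
Proof. apply derivable_pt_lim_minus. Qed.
Lemma D_opp f t a : derivable_pt_lim f t a -> derivable_pt_lim (fun s => - f s) t (- a).
Proof. apply derivable_pt_lim_opp. Qed.
Lemma D_mult f g t a b : derivable_pt_lim f t a -> derivable_pt_lim g t b ->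
  derivable_pt_lim (fun s => f s * g s) t (a * g t + f t * b).
Proof. apply derivable_pt_lim_mult. Qed.
Lemma D_scal c f t a : derivable_pt_lim f t a -> derivable_pt_lim (fun s => c * f s) t (c * a).
Proof. intros H. eapply D_ext; [apply (D_mult (fun _ => c) f); [apply D_const | exact H] | ring]. Qed.
Lemma D_inv f t a : derivable_pt_lim f t a -> f t <> 0 ->
  derivable_pt_lim (fun s => / f s) t (- a / (f t * f t)).
Proof.
  intros H Hn.
  pose proof (derivable_pt_lim_div (fun _ => 1) f t 0 a (D_const 1 t) H Hn) as E.
  replace (fun s => / f s) with (((fun _ : R => 1) / f)%F)
    by (apply functional_extensionality; intro s; unfold div_fct, Rdiv; ring).
  eapply D_ext; [exact E | unfold Rsqr; field; exact Hn].
Qed.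
Lemma D_sqrt f t a : derivable_pt_lim f t a -> 0 < f t ->
  derivable_pt_lim (fun s => sqrt (f s)) t (/ (2 * sqrt (f t)) * a).
Proof.
  intros H Hp. eapply D_ext;
    [exact (derivable_pt_lim_comp f sqrt t a _ H (derivable_pt_lim_sqrt _ Hp)) | ring].
Qed.
Lemma D_exp f t a : derivable_pt_lim f t a ->
  derivable_pt_lim (fun s => exp (f s)) t (exp (f t) * a).
Proof. intros H. exact (derivable_pt_lim_comp f exp t a _ H (derivable_pt_lim_exp _)). Qed.

Ltac D_auto := repeat first [ apply D_plus | apply D_minus | apply D_mult | apply D_opp
  | apply D_const | eassumption ].

Lemma mat_deriv_mmul A B dA dB t : mat_deriv_at A t dA -> mat_deriv_at B t dB ->
  mat_deriv_at (fun s => mmul (A s) (B s)) t (madd (mmul dA (B t)) (mmul (A t) dB)).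
Proof.
  intros (?&?&?&?&?&?&?&?&?) (?&?&?&?&?&?&?&?&?). unfold mat_deriv_at; cbn.
  repeat split; (eapply D_ext; [D_auto | cbn; ring]).
Qed.
Lemma mat_deriv_mT A dA t : mat_deriv_at A t dA -> mat_deriv_at (fun s => mT (A s)) t (mT dA).
Proof. intros (?&?&?&?&?&?&?&?&?). unfold mat_deriv_at; cbn. tauto. Qed.
Lemma mat_deriv_msub A B dA dB t : mat_deriv_at A t dA -> mat_deriv_at B t dB ->
  mat_deriv_at (fun s => msub (A s) (B s)) t (msub dA dB).
Proof.
  intros (?&?&?&?&?&?&?&?&?) (?&?&?&?&?&?&?&?&?). unfold mat_deriv_at; cbn.
  repeat split; (eapply D_ext; [D_auto | cbn; ring]).
Qed.
Lemma vec_deriv_vee A dA t : mat_deriv_at A t dA -> vec_deriv_at (fun s => vee (A s)) t (vee dA).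
Proof. intros (?&?&?&?&?&?&?&?&?). unfold vec_deriv_at; cbn. tauto. Qed.
Lemma D_trace A dA t : mat_deriv_at A t dA ->
  derivable_pt_lim (fun s => trace (A s)) t (trace dA).
Proof. intros (?&?&?&?&?&?&?&?&?). unfold trace. D_auto. Qed.
Lemma D_det A dA t : mat_deriv_at A t dA ->
  derivable_pt_lim (fun s => det (A s)) t (trace (mmul (mT (cof (A t))) dA)).
Proof.
  intros (?&?&?&?&?&?&?&?&?). unfold det. eapply D_ext; [D_auto|].
  cbv beta. generalize (A t). intros M. mat_ring.
Qed.
Lemma vec_deriv_mvmul A x dA dx t : mat_deriv_at A t dA -> vec_deriv_at x t dx ->
  vec_deriv_at (fun s => mvmul (A s) (x s)) t (vadd (mvmul dA (x t)) (mvmul (A t) dx)).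
Proof.
  intros (?&?&?&?&?&?&?&?&?) (?&?&?). unfold vec_deriv_at; cbn.
  repeat split; (eapply D_ext; [D_auto | cbn; ring]).
Qed.
Lemma vec_deriv_mvmulr (A : mat) x dx t : vec_deriv_at x t dx ->
  vec_deriv_at (fun s => mvmul A (x s)) t (mvmul A dx).
Proof.
  intros (?&?&?). unfold vec_deriv_at; cbn.
  repeat split; (eapply D_ext; [D_auto | cbn; ring]).
Qed.
Lemma vec_deriv_vsub x y dx dy t : vec_deriv_at x t dx -> vec_deriv_at y t dy ->
  vec_deriv_at (fun s => vsub (x s) (y s)) t (vsub dx dy).
Proof.
  intros (?&?&?) (?&?&?). unfold vec_deriv_at; cbn.
  repeat split; (eapply D_ext; [D_auto | cbn; ring]).
Qed.
Lemma vec_deriv_vscale f x df dx t : derivable_pt_lim f t df -> vec_deriv_at x t dx ->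
  vec_deriv_at (fun s => vscale (f s) (x s)) t (vadd (vscale df (x t)) (vscale (f t) dx)).
Proof.
  intros ? (?&?&?). unfold vec_deriv_at; cbn.
  repeat split; (eapply D_ext; [D_auto | cbn; ring]).
Qed.
Lemma D_dot x y dx dy t : vec_deriv_at x t dx -> vec_deriv_at y t dy ->
  derivable_pt_lim (fun s => dot (x s) (y s)) t (dot dx (y t) + dot (x t) dy).
Proof. intros (?&?&?) (?&?&?). unfold dot. eapply D_ext; [D_auto | cbn; ring]. Qed.

Lemma rcont0_limit g : rcont0 g <-> limit1_in g (fun s => 0 <= s) (g 0) 0.
Proof.
  unfold rcont0, limit1_in, limit_in; cbn; unfold R_dist; split.
  - intros H eps He. destruct (H eps He) as [d [Hd H']]. exists d; split; [lra|].
    intros x [Hx1 Hx2]. apply H'. rewrite Rminus_0_r, Rabs_right in Hx2 by lra. lra.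
  - intros H eps He. destruct (H eps He) as [d [Hd H']]. exists d; split; [lra|].
    intros x [Hx1 Hx2]. apply H'. split; [lra|]. rewrite Rminus_0_r, Rabs_right; lra.
Qed.

Lemma rcont0_plus f g : rcont0 f -> rcont0 g -> rcont0 (fun s => f s + g s).
Proof. rewrite !rcont0_limit. apply limit_plus. Qed.
Lemma rcont0_mult f g : rcont0 f -> rcont0 g -> rcont0 (fun s => f s * g s).
Proof. rewrite !rcont0_limit. apply limit_mul. Qed.
Lemma rcont0_const c : rcont0 (fun _ => c).
Proof. intros eps He. exists 1. split; [lra|]. intros. rewrite Rminus_diag, Rabs_R0. lra. Qed.
Lemma rcont0_opp f : rcont0 f -> rcont0 (fun s => - f s).
Proof.
  intros H. replace (fun s => - f s) with (fun s => (-1) * f s)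
    by (apply functional_extensionality; intro; ring).
  exact (rcont0_mult _ _ (rcont0_const (-1)) H).
Qed.
Lemma rcont0_minus f g : rcont0 f -> rcont0 g -> rcont0 (fun s => f s - g s).
Proof. intros. apply rcont0_plus; [| apply rcont0_opp]; assumption. Qed.
Lemma rcont0_comp f h : rcont0 f -> continuity_pt h (f 0) -> rcont0 (fun s => h (f s)).
Proof.
  intros H Hc eps He.
  destruct (Hc eps He) as [d [Hd H']]. cbn in H'. unfold R_dist in H'.
  destruct (H d Hd) as [d2 [Hd2 H2]]. exists d2; split; [lra|].
  intros s Hs. destruct (Req_dec (f s) (f 0)) as [E|E].
  - rewrite E, Rminus_diag, Rabs_R0; lra.
  - apply H'. repeat split; auto.
Qed.
Lemma rcont0_of_continuity_pt f : continuity_pt f 0 -> rcont0 f.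
Proof.
  intros Hc eps He. destruct (Hc eps He) as [d [Hd H']]. cbn in H'. unfold R_dist in H'.
  exists d; split; [lra|]. intros s Hs. destruct (Req_dec s 0) as [->|E].
  - rewrite Rminus_diag, Rabs_R0; lra.
  - apply H'. repeat split; auto. rewrite Rminus_0_r, Rabs_right; lra.
Qed.
Lemma continuity_pt_of_deriv f t l : derivable_pt_lim f t l -> continuity_pt f t.
Proof. intros H. apply derivable_continuous_pt. exists l. exact H. Qed.
Lemma rcont0_sqrt f : rcont0 f -> 0 < f 0 -> rcont0 (fun s => sqrt (f s)).
Proof. intros H Hp. apply rcont0_comp; [exact H | apply continuity_pt_sqrt; lra]. Qed.
Lemma rcont0_inv f : rcont0 f -> f 0 <> 0 -> rcont0 (fun s => / f s).
Proof.
  intros H Hp. apply (rcont0_comp f Rinv H).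
  apply (continuity_pt_inv (fun x => x)); [apply derivable_continuous_pt, derivable_pt_id | exact Hp].
Qed.

Ltac rcont0_auto := repeat first [ apply rcont0_plus | apply rcont0_minus | apply rcont0_mult
  | apply rcont0_opp | apply rcont0_const | eassumption ].

Lemma mat_rcont0_mmul A B : mat_rcont0 A -> mat_rcont0 B -> mat_rcont0 (fun s => mmul (A s) (B s)).
Proof.
  intros (?&?&?&?&?&?&?&?&?) (?&?&?&?&?&?&?&?&?). unfold mat_rcont0; cbn.
  repeat split; rcont0_auto.
Qed.
Lemma mat_rcont0_mT A : mat_rcont0 A -> mat_rcont0 (fun s => mT (A s)).
Proof. intros (?&?&?&?&?&?&?&?&?). unfold mat_rcont0; cbn; tauto. Qed.
Lemma mat_rcont0_msub A B : mat_rcont0 A -> mat_rcont0 B -> mat_rcont0 (fun s => msub (A s) (B s)).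
Proof.
  intros (?&?&?&?&?&?&?&?&?) (?&?&?&?&?&?&?&?&?). unfold mat_rcont0; cbn.
  repeat split; rcont0_auto.
Qed.
Lemma vec_rcont0_vee A : mat_rcont0 A -> vec_rcont0 (fun s => vee (A s)).
Proof. intros (?&?&?&?&?&?&?&?&?). unfold vec_rcont0; cbn. tauto. Qed.
Lemma rcont0_trace A : mat_rcont0 A -> rcont0 (fun s => trace (A s)).
Proof. intros (?&?&?&?&?&?&?&?&?). unfold trace. rcont0_auto. Qed.
Lemma rcont0_det A : mat_rcont0 A -> rcont0 (fun s => det (A s)).
Proof. intros (?&?&?&?&?&?&?&?&?). unfold det. rcont0_auto. Qed.
Lemma vec_rcont0_mvmul A x : mat_rcont0 A -> vec_rcont0 x ->
  vec_rcont0 (fun s => mvmul (A s) (x s)).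
Proof.
  intros (?&?&?&?&?&?&?&?&?) (?&?&?). unfold vec_rcont0; cbn. repeat split; rcont0_auto.
Qed.
Lemma vec_rcont0_mvmulr (A : mat) x : vec_rcont0 x -> vec_rcont0 (fun s => mvmul A (x s)).
Proof. intros (?&?&?). unfold vec_rcont0; cbn. repeat split; rcont0_auto. Qed.
Lemma vec_rcont0_vsub x y : vec_rcont0 x -> vec_rcont0 y -> vec_rcont0 (fun s => vsub (x s) (y s)).
Proof. intros (?&?&?) (?&?&?). unfold vec_rcont0; cbn. repeat split; rcont0_auto. Qed.
Lemma vec_rcont0_vscale f x : rcont0 f -> vec_rcont0 x -> vec_rcont0 (fun s => vscale (f s) (x s)).
Proof. intros ? (?&?&?). unfold vec_rcont0; cbn. repeat split; rcont0_auto. Qed.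
Lemma rcont0_dot x y : vec_rcont0 x -> vec_rcont0 y -> rcont0 (fun s => dot (x s) (y s)).
Proof. intros (?&?&?) (?&?&?). unfold dot. rcont0_auto. Qed.
Lemma mat_rcont0_of_deriv A d : mat_deriv_at A 0 d -> mat_rcont0 A.
Proof.
  intros (?&?&?&?&?&?&?&?&?).
  repeat split; eapply rcont0_of_continuity_pt, continuity_pt_of_deriv; eassumption.
Qed.
Lemma vec_rcont0_of_deriv x d : vec_deriv_at x 0 d -> vec_rcont0 x.
Proof.
  intros (?&?&?).
  repeat split; eapply rcont0_of_continuity_pt, continuity_pt_of_deriv; eassumption.
Qed.

Lemma nonincreasing_of_deriv f a b : a < b ->
  (forall x, a <= x <= b -> exists d, derivable_pt_lim f x d /\ d <= 0) -> f b <= f a.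
Proof.
  intros Hab H.
  assert (Ex : forall x, exists d, a <= x <= b -> derivable_pt_lim f x d /\ d <= 0).
  { intros x. destruct (classic (a <= x <= b)) as [Hx|Hx].
    - destruct (H x Hx) as [d Hd]. exists d; intros; exact Hd.
    - exists 0; intros; contradiction. }
  destruct (choice _ Ex) as [f' Hf'].
  destruct (MVT_cor2 f f' a b Hab) as [c [Hc1 Hc2]]; [intros c Hc; apply (Hf' c Hc)|].
  assert (f' c <= 0) by (apply (Hf' c); lra).
  nra.
Qed.

Lemma nonincreasing_of_deriv0 f t : 0 <= t -> rcont0 f ->
  (forall u, 0 < u <= t -> exists d, derivable_pt_lim f u d /\ d <= 0) -> f t <= f 0.
Proof.
  intros Ht Hc H. destruct (Req_dec t 0) as [->|Hne]; [lra|].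
  destruct (Rle_dec (f t) (f 0)) as [|Hgt]; [assumption|]. exfalso.
  destruct (Hc (f t - f 0)) as [d [Hd Hd']]; [lra|].
  set (a := Rmin (d/2) (t/2)).
  assert (Ha1 : 0 < a) by (apply Rmin_glb_lt; lra).
  assert (a <= d/2) by apply Rmin_l.
  assert (a <= t/2) by apply Rmin_r.
  assert (f t <= f a) by (apply nonincreasing_of_deriv; [lra | intros x Hx; apply H; lra]).
  specialize (Hd' a ltac:(lra)). apply Rabs_def2 in Hd'. lra.
Qed.

Lemma constant_of_deriv0 f : rcont0 f -> (forall u, 0 < u -> derivable_pt_lim f u 0) ->
  forall t, 0 <= t -> f t = f 0.
Proof.
  intros Hc Hd t Ht.
  assert (f t <= f 0).
  { apply nonincreasing_of_deriv0; auto. intros u Hu. exists 0. split; [apply Hd; lra | lra]. }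
  assert (- f t <= - f 0).
  { apply (nonincreasing_of_deriv0 (fun s => - f s)); auto using rcont0_opp.
    intros u Hu. exists (-0). split; [apply D_opp, Hd; lra | lra]. }
  lra.
Qed.

Section Barrier.
Variables (g : R -> R) (a : R).
Hypotheses (g_rcont0 : rcont0 g) (g_cont : forall t, 0 < t -> continuity_pt g t)
  (g0_pos : 0 < g 0) (a_pos : 0 < a)
  (g_barrier : forall t, 0 < t -> (forall u, 0 <= u <= t -> 0 < g u) -> a <= g t).

Lemma barrier_rcont tau : 0 <= tau -> forall eps, 0 < eps ->
  exists d, 0 < d /\ forall u, tau <= u < tau + d -> Rabs (g u - g tau) < eps.
Proof.
  intros Ht eps He. destruct (Req_dec tau 0) as [->|Hne].
  - destruct (g_rcont0 eps He) as [d [Hd H]]. exists d; split; [lra|].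
    intros u Hu; apply H; lra.
  - destruct (g_cont tau ltac:(lra) eps He) as [d [Hd H]]. cbn in H; unfold R_dist in H.
    exists d; split; [lra|]. intros u Hu. destruct (Req_dec u tau) as [->|Hu'].
    + rewrite Rminus_diag, Rabs_R0; lra.
    + apply H. repeat split; auto. rewrite Rabs_right; lra.
Qed.

Lemma barrier_left_limit tau : 0 < tau -> (forall u, 0 <= u < tau -> 0 < g u) -> 0 < g tau.
Proof.
  intros Htau Hpos. destruct (Rle_dec a (g tau)) as [|Hlt]; [lra|]. exfalso.
  destruct (g_cont tau Htau (a - g tau)) as [d [Hd Hd']]; [lra|]. cbn in Hd'; unfold R_dist in Hd'.
  set (u := Rmax (tau - d/2) (tau/2)).
  assert (tau - d/2 <= u) by apply Rmax_l.
  assert (tau/2 <= u) by apply Rmax_r.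
  assert (u < tau) by (apply Rmax_lub_lt; lra).
  assert (a <= g u) by (apply g_barrier; [lra | intros v Hv; apply Hpos; lra]).
  assert (Hclose : Rabs (g u - g tau) < a - g tau).
  { apply Hd'. split; [split; [exact I | lra] | rewrite Rabs_left; lra]. }
  apply Rabs_def2 in Hclose. lra.
Qed.

(* [g] stays positive: at the supremum of the times up to which it is positive
   it is still positive, by [g_barrier], and then by continuity beyond it. *)
Lemma barrier_pos t1 : 0 <= t1 -> 0 < g t1.
Proof.
  intros Ht1. destruct (Rlt_dec 0 (g t1)) as [|Hneg]; [assumption|]. exfalso.
  assert (Ht1p : 0 < t1) by (destruct (Req_dec t1 0) as [->|]; lra).
  set (E := fun x => 0 <= x <= t1 /\ forall u, 0 <= u <= x -> 0 < g u).
  assert (E0 : E 0) by (split; [lra | intros u Hu; replace u with 0 by lra; exact g0_pos]).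
  destruct (completeness E) as [tau [Hub Hlub]];
    [exists t1; intros x [Hx _]; lra | exists 0; exact E0 |].
  assert (Htau0 : 0 <= tau) by (apply Hub, E0).
  assert (Htau1 : tau <= t1) by (apply Hlub; intros x [Hx _]; lra).
  assert (Hbelow : forall u, 0 <= u < tau -> 0 < g u).
  { intros u Hu. destruct (classic (exists x, E x /\ u < x)) as [[x [[_ Hx] Hux]]|Hno].
    - apply Hx; lra.
    - enough (tau <= u) by lra. apply Hlub. intros x Ex.
      destruct (Rle_dec x u); [assumption|]. exfalso; apply Hno; exists x; split; [assumption|lra]. }
  assert (Htau : 0 < g tau).
  { destruct (Req_dec tau 0) as [->|]; [exact g0_pos | apply barrier_left_limit; [lra | exact Hbelow]]. }
  destruct (Req_dec tau t1) as [->|Hne]; [lra|].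
  destruct (barrier_rcont tau Htau0 (g tau) Htau) as [d [Hd Hd']].
  set (x := Rmin (tau + d/2) t1).
  assert (x <= tau + d/2) by apply Rmin_l.
  assert (x <= t1) by apply Rmin_r.
  assert (tau < x) by (apply Rmin_glb_lt; lra).
  enough (E x) by (specialize (Hub x H2); lra).
  split; [lra|]. intros u Hu. destruct (Rlt_dec u tau) as [|Hge]; [apply Hbelow; lra|].
  destruct (Req_dec u tau) as [->|]; [exact Htau|].
  specialize (Hd' u ltac:(lra)). apply Rabs_def2 in Hd'. lra.
Qed.

End Barrier.


(** * Quadratic forms and eigenvalues *)

Definition qf (J : mat) (x : vec) : R := dot x (mvmul J x).
Definition charpoly (J : mat) (l : R) : R := det (msub (mscale l mid) J).

(* Completing the square twice: [a m2 Q] is a sum of squares with positive weights. *)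
Lemma quad3_nonneg a b c d f g x1 x2 x3 : 0 < a -> 0 < a*d - b*b ->
  0 < a*(d*g - f*f) - b*(b*g - f*c) + c*(b*f - d*c) ->
  0 <= a*x1*x1 + d*x2*x2 + g*x3*x3 + 2*b*x1*x2 + 2*c*x1*x3 + 2*f*x2*x3.
Proof.
  intros Ha Hm HD.
  set (m2 := a*d - b*b) in *. set (D := a*(d*g - f*f) - b*(b*g - f*c) + c*(b*f - d*c)) in *.
  set (Q := a*x1*x1 + d*x2*x2 + g*x3*x3 + 2*b*x1*x2 + 2*c*x1*x3 + 2*f*x2*x3).
  assert (E : a*m2*Q = m2*(a*x1 + b*x2 + c*x3)^2 + (m2*x2 + (a*f - b*c)*x3)^2 + a*D*x3^2)
    by (unfold m2, D, Q; ring).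
  assert (0 <= m2*(a*x1 + b*x2 + c*x3)^2 + (m2*x2 + (a*f - b*c)*x3)^2 + a*D*x3^2).
  { pose proof (pow2_ge_0 (a*x1 + b*x2 + c*x3)). pose proof (pow2_ge_0 (m2*x2 + (a*f - b*c)*x3)).
    pose proof (pow2_ge_0 x3). assert (0 < a * D) by (apply Rmult_lt_0_compat; lra). nra. }
  assert (0 < a * m2) by nra.
  nra.
Qed.

Local Ltac try_kernel x := let Z := fresh "Z" in
  destruct (classic (x = vzero)) as [Z|?];
  [ pose proof (f_equal v1 Z); pose proof (f_equal v2 Z); pose proof (f_equal v3 Z);
    cbn in *; clear Z
  | exists x; split; [assumption | apply vec_ext; cbn; lra] ].

(* Candidates: cross products of two rows of [N], then of a row with a basis
   vector; when [det N = 0] the first nonzero one is in the kernel, and if all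
   of them vanish then [N = 0]. *)
Lemma det_eq0_kernel N : det N = 0 -> exists x, x <> vzero /\ mvmul N x = vzero.
Proof.
  intros Hd. destruct N as [a b c d e f g h i]. unfold det in Hd; cbn in Hd.
  try_kernel (mkV (e*i - f*h) (f*g - d*i) (d*h - e*g)).
  try_kernel (mkV (c*h - b*i) (a*i - c*g) (b*g - a*h)).
  try_kernel (mkV (b*f - c*e) (c*d - a*f) (a*e - b*d)).
  try_kernel (mkV 0 c (-b)). try_kernel (mkV (-c) 0 a).
  try_kernel (mkV 0 f (-e)). try_kernel (mkV (-f) 0 d).
  try_kernel (mkV 0 i (-h)). try_kernel (mkV (-i) 0 g).
  exists (mkV 1 0 0). split.
  - intro Z. pose proof (f_equal v1 Z). cbn in *. lra.
  - apply vec_ext; cbn; lra.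
Qed.

Lemma kernel_det_eq0 N x : x <> vzero -> mvmul N x = vzero -> det N = 0.
Proof.
  intros Hx HN. destruct (Req_dec (det N) 0) as [|Hd]; [assumption|]. exfalso. apply Hx.
  assert (E : vscale (det N) x = vzero).
  { rewrite <- (mvmul1 x) at 1. rewrite <- mvmul_mscale, <- mmul_cofTl, mvmul_mmul, HN.
    mat_ring. }
  destruct x; unfold vscale in E. injection E; intros.
  apply vec_ext; cbn; apply (Rmult_eq_reg_l (det N)); lra.
Qed.

Lemma eigenvalue_charpoly J l : is_eigenvalue J l <-> charpoly J l = 0.
Proof.
  unfold is_eigenvalue, charpoly. split.
  - intros [v [Hv E]]. apply (kernel_det_eq0 _ v Hv).
    assert (mvmul (msub (mscale l mid) J) v = vsub (vscale l v) (mvmul J v)) by mat_ring.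
    rewrite H, E. mat_ring.
  - intros H. destruct (det_eq0_kernel _ H) as [v [Hv E]]. exists v. split; [exact Hv|].
    destruct J, v. mat_unfold. injection E; intros. apply vec_ext; cbn; lra.
Qed.

Lemma charpoly_continuity J : continuity (charpoly J).
Proof. destruct J. unfold charpoly, det. cbn. reg. Qed.

Lemma eigenvalue_posdef_pos J l : posdef J -> is_eigenvalue J l -> 0 < l.
Proof.
  intros Hp [v [Hv E]]. pose proof (Hp v Hv) as H. rewrite E, dotC, dot_vscalel in H.
  pose proof (dot_gt0 v Hv). nra.
Qed.

Lemma qf_ge0_posdef J x : posdef J -> 0 <= qf J x.
Proof.
  intros Hp. destruct (classic (x = vzero)) as [->|Hx].
  - unfold qf, dot; cbn. lra.
  - apply Rlt_le, Hp, Hx.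
Qed.

Section SymmetricForm.
Variable J : mat.
Hypothesis J_sym : symmetric J.

Local Notation a := (m11 J). Local Notation b := (m12 J). Local Notation c := (m13 J).
Local Notation d := (m22 J). Local Notation f := (m23 J). Local Notation g := (m33 J).

Lemma symmetric_entries : m21 J = b /\ m31 J = c /\ m32 J = f.
Proof.
  unfold symmetric in J_sym. pose proof (f_equal m12 J_sym); pose proof (f_equal m13 J_sym);
  pose proof (f_equal m23 J_sym). cbn in *. auto.
Qed.

Lemma charpoly_sym l : charpoly J l = (l - g) * ((l - a)*(l - d) - b*b)
   - ((l - d)*c*c + 2*b*c*f + (l - a)*f*f).
Proof.
  destruct symmetric_entries as (E1 & E2 & E3). unfold charpoly, det; cbn.
  rewrite E1, E2, E3. ring.
Qed.

Lemma qf_sym x : qf J x = a*v1 x*v1 x + d*v2 x*v2 x + g*v3 x*v3 x + 2*b*v1 x*v2 x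
   + 2*c*v1 x*v3 x + 2*f*v2 x*v3 x.
Proof.
  destruct symmetric_entries as (E1 & E2 & E3). unfold qf, dot; cbn.
  rewrite E1, E2, E3. ring.
Qed.

Lemma charpoly_large : exists L, forall l, L <= l -> 0 < charpoly J l.
Proof.
  set (t := a + d + g). set (s2 := a*d - b*b + a*g - c*c + d*g - f*f).
  set (D := a*(d*g - f*f) - b*(b*g - f*c) + c*(b*f - d*c)).
  exists (1 + Rabs t + Rabs s2 + Rabs D). intros l Hl.
  assert (E : charpoly J l = l^2 * (l - t) + s2*l - D)
    by (rewrite charpoly_sym; unfold t, s2, D; ring).
  rewrite E.
  pose proof (Rle_abs t); pose proof (Rle_abs (-s2)); pose proof (Rle_abs D).
  rewrite Rabs_Ropp in *.
  pose proof (Rabs_pos t); pose proof (Rabs_pos s2); pose proof (Rabs_pos D).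
  assert (1 <= l) by lra. assert (1 <= l^2) by nra.
  assert (Rabs s2 * l <= Rabs s2 * l^2) by (apply Rmult_le_compat_l; [apply Rabs_pos | nra]).
  assert (0 < l^2 * (l - Rabs t - Rabs s2 - Rabs D)) by (apply Rmult_lt_0_compat; lra).
  nra.
Qed.

(* The largest eigenvalue of the upper-left 2x2 block. *)
Definition block_eig : R := (a + d)/2 + sqrt (((a - d)/2)^2 + b*b).

Lemma block_eig_spec : a <= block_eig /\ d <= block_eig /\
  (block_eig - a) * (block_eig - d) - b*b = 0.
Proof.
  set (D := ((a - d)/2)^2 + b*b).
  assert (HD : 0 <= D) by (unfold D; pose proof (pow2_ge_0 ((a - d)/2)); nra).
  pose proof (sqrt_sqrt D HD). pose proof (sqrt_pos D).
  assert (Rabs ((a - d)/2) <= sqrt D).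
  { rewrite <- sqrt_Rsqr_abs. apply sqrt_le_1_alt. unfold Rsqr, D. nra. }
  pose proof (Rle_abs ((a - d)/2)). pose proof (Rle_abs (-((a - d)/2))). rewrite Rabs_Ropp in *.
  unfold block_eig; fold D. split; [lra | split; [lra |]].
  replace ((a + d)/2 + sqrt D - a) with (sqrt D - (a - d)/2) by field.
  replace ((a + d)/2 + sqrt D - d) with (sqrt D + (a - d)/2) by field.
  unfold D in *. nra.
Qed.

Lemma minor2_pos l : block_eig < l -> 0 < (l - a)*(l - d) - b*b.
Proof.
  intros Hl. set (D := ((a - d)/2)^2 + b*b).
  assert (HD : 0 <= D) by (unfold D; pose proof (pow2_ge_0 ((a - d)/2)); nra).
  pose proof (sqrt_sqrt D HD). pose proof (sqrt_pos D).
  unfold block_eig in Hl; fold D in Hl.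
  assert (E : (l - a)*(l - d) - b*b = (l - (a + d)/2)^2 - D) by (unfold D; field).
  rewrite E. nra.
Qed.

Lemma charpoly_block_eig : charpoly J block_eig <= 0.
Proof.
  destruct block_eig_spec as (Ha & Hd & Hm). set (mu := block_eig) in *.
  enough (0 <= (mu - d)*c*c + 2*b*c*f + (mu - a)*f*f)
    by (rewrite charpoly_sym, Hm; lra).
  destruct (Req_dec (mu - d) 0) as [Z|Z].
  - assert (b = 0) by (rewrite Z in Hm; nra). subst. rewrite Z, H. nra.
  - assert (E : (mu - d)*((mu - d)*c*c + 2*b*c*f + (mu - a)*f*f)
                = ((mu - d)*c + b*f)^2 + ((mu - a)*(mu - d) - b*b)*f*f) by ring.
    rewrite Hm in E. pose proof (pow2_ge_0 ((mu - d)*c + b*f)). nra.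
Qed.

Section EigenvalueBound.
Variable lmax : R.
Hypothesis eig_le : forall l, is_eigenvalue J l -> l <= lmax.

Lemma charpoly_pos l : lmax < l -> 0 < charpoly J l.
Proof.
  intros Hl. destruct (Rlt_dec 0 (charpoly J l)) as [|Hn]; [assumption|]. exfalso.
  destruct (Req_dec (charpoly J l) 0) as [Hr|Hr].
  { apply eigenvalue_charpoly, eig_le in Hr. lra. }
  destruct charpoly_large as [L HL].
  destruct (IVT (charpoly J) l (Rmax (l + 1) L) (charpoly_continuity J)) as [z [Hz Hz0]].
  - pose proof (Rmax_l (l + 1) L). lra.
  - lra.
  - apply HL, Rmax_r.
  - apply eigenvalue_charpoly, eig_le in Hz0. lra.
Qed.

Lemma block_eig_le : block_eig <= lmax.
Proof.
  destruct (Rle_dec block_eig lmax) as [|Hn]; [assumption|].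
  pose proof charpoly_block_eig. pose proof (charpoly_pos block_eig ltac:(lra)). lra.
Qed.

(* For [l > lmax] the leading minors of [l I - J] are positive, so [l I - J] is
   positive semidefinite. *)
Lemma qf_le_shift x l : lmax < l -> qf J x <= l * dot x x.
Proof.
  intros Hl. pose proof (charpoly_pos l Hl) as H3. rewrite charpoly_sym in H3.
  pose proof block_eig_le. pose proof (minor2_pos l ltac:(lra)) as H2.
  destruct block_eig_spec as (Ha & _).
  pose proof (quad3_nonneg (l - a) (-b) (-c) (l - d) (-f) (l - g) (v1 x) (v2 x) (v3 x)
    ltac:(lra) ltac:(nra) ltac:(nra)).
  rewrite qf_sym. unfold dot. nra.
Qed.

Lemma qf_le_eig_bound x : qf J x <= lmax * dot x x.
Proof.
  destruct (Rle_dec (qf J x) (lmax * dot x x)) as [|Hn]; [assumption|]. exfalso.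
  pose proof (dot_ge0 x).
  set (del := (qf J x - lmax * dot x x) / (2 * (dot x x + 1))).
  assert (0 < del) by (apply Rdiv_lt_0_compat; lra).
  pose proof (qf_le_shift x (lmax + del) ltac:(lra)).
  assert (del * dot x x < qf J x - lmax * dot x x).
  { unfold del. apply Rmult_lt_reg_r with (2 * (dot x x + 1)); [lra|].
    field_simplify; [nra | lra]. }
  nra.
Qed.

End EigenvalueBound.
End SymmetricForm.

Lemma qf_le_lambda_max J lmax x : symmetric J -> is_lambda_max J lmax ->
  qf J x <= lmax * dot x x.
Proof. intros Hs [_ Hl]. exact (qf_le_eig_bound J Hs lmax Hl x). Qed.

Lemma lambda_max_pos J lmax : posdef J -> is_lambda_max J lmax -> 0 < lmax.
Proof. intros Hp [Hl _]. exact (eigenvalue_posdef_pos J lmax Hp Hl). Qed.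

(* [charpoly J] is continuous and nonzero at 0, hence has no root near 0. *)
Lemma eigenvalues_bounded_below J : posdef J ->
  exists mu, 0 < mu /\ forall l, is_eigenvalue J l -> mu <= l.
Proof.
  intros Hp.
  assert (H0 : charpoly J 0 <> 0).
  { intros H0. apply eigenvalue_charpoly in H0. pose proof (eigenvalue_posdef_pos J 0 Hp H0). lra. }
  destruct (charpoly_continuity J 0 (Rabs (charpoly J 0))) as [mu [Hmu Hnear]];
    [apply Rabs_pos_lt, H0|].
  exists mu. split; [exact Hmu|]. intros l Hl.
  pose proof (eigenvalue_posdef_pos J l Hp Hl). apply eigenvalue_charpoly in Hl.
  destruct (Rle_dec mu l) as [|Hlt]; [assumption|]. exfalso.
  specialize (Hnear l). cbn in Hnear; unfold R_dist in Hnear.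
  rewrite Hl, Rminus_0_l, Rabs_Ropp, Rminus_0_r, Rabs_right in Hnear by lra.
  assert (Rabs (charpoly J 0) < Rabs (charpoly J 0)) by (apply Hnear; repeat split; lra). lra.
Qed.

Lemma qf_ge_posdef J : symmetric J -> posdef J ->
  exists mu, 0 < mu /\ forall x, mu * dot x x <= qf J x.
Proof.
  intros Hs Hp. destruct (eigenvalues_bounded_below J Hp) as [mu [Hmu Hl]].
  exists mu. split; [exact Hmu|]. intros x.
  assert (Hs' : symmetric (mscale (-1) J)).
  { unfold symmetric in *. rewrite <- Hs at 2. mat_ring. }
  assert (Hl' : forall l, is_eigenvalue (mscale (-1) J) l -> l <= - mu).
  { intros l [v [Hv E]]. enough (mu <= - l) by lra. apply Hl. exists v. split; [exact Hv|].
    rewrite mvmul_mscale in E. destruct v. mat_unfold. injection E; intros.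
    apply vec_ext; cbn; lra. }
  pose proof (qf_le_eig_bound _ Hs' (- mu) Hl' x).
  assert (qf (mscale (-1) J) x = - qf J x) by (unfold qf; mat_ring). lra.
Qed.


(** * Attitude kinematics *)

Lemma trace_mmul_hat Q e : trace (mmul Q (hat e)) = - dot (vee (msub Q (mT Q))) e.
Proof. mat_ring. Qed.
Lemma vee_skew_mmul_hat Q e : vee (msub (mmul Q (hat e)) (mT (mmul Q (hat e)))) =
  mvmul (msub (mscale (trace Q) mid) (mT Q)) e.
Proof. mat_ring. Qed.
Lemma hat_conj M x : mmul (mT M) (mmul (hat x) M) = hat (mvmul (mT (cof M)) x).
Proof. mat_ring. Qed.

Lemma SO3_flow (Rm : R -> mat) (W : R -> vec) : SO3 (Rm 0) -> mat_rcont0 Rm ->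
  (forall t, 0 < t -> mat_deriv_at Rm t (mmul (Rm t) (hat (W t)))) ->
  forall t, 0 <= t -> SO3 (Rm t).
Proof.
  intros H0 Hc Hd t Ht.
  assert (EM : mmul (Rm t) (mT (Rm t)) = mid).
  { rewrite <- (SO3_mmul_mT _ H0).
    assert (HD : forall u, 0 < u -> mat_deriv_at (fun s => mmul (Rm s) (mT (Rm s))) u mzero).
    { intros u Hu. pose proof (mat_deriv_mmul _ _ _ _ u (Hd u Hu) (mat_deriv_mT _ _ u (Hd u Hu))) as X.
      replace mzero with (madd (mmul (mmul (Rm u) (hat (W u))) (mT (Rm u)))
                               (mmul (Rm u) (mT (mmul (Rm u) (hat (W u)))))) by mat_ring.
      exact X. }
    destruct (mat_rcont0_mmul _ _ Hc (mat_rcont0_mT _ Hc)) as (?&?&?&?&?&?&?&?&?).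
    apply mat_ext;
    match goal with |- ?p _ = ?p _ =>
      apply (constant_of_deriv0 (fun s => p (mmul (Rm s) (mT (Rm s))))); [ assumption | | exact Ht] end;
    intros u Hu; destruct (HD u Hu) as (?&?&?&?&?&?&?&?&?); assumption. }
  assert (ED : det (Rm t) = 1).
  { destruct H0 as [_ H0]. rewrite <- H0.
    apply (constant_of_deriv0 (fun s => det (Rm s))); [apply rcont0_det, Hc | | exact Ht].
    intros u Hu. eapply D_ext; [exact (D_det _ _ u (Hd u Hu)) | mat_ring]. }
  assert (HT : SO3 (mT (Rm t))) by (split; [rewrite mTK; exact EM | rewrite det_mT; exact ED]).
  pose proof (SO3_mmul_mT _ HT) as X. rewrite mTK in X. split; assumption.
Qed.

Lemma rel_attitude_deriv (Rm Rd : R -> mat) (W Wd : R -> vec) t :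
  SO3 (Rm t) -> SO3 (Rd t) ->
  mat_deriv_at Rm t (mmul (Rm t) (hat (W t))) ->
  mat_deriv_at Rd t (mmul (Rd t) (hat (Wd t))) ->
  mat_deriv_at (fun s => mmul (mT (Rd s)) (Rm s)) t
    (mmul (mmul (mT (Rd t)) (Rm t)) (hat (eW (Rm t) (W t) (Rd t) (Wd t)))).
Proof.
  intros HRm HRd dRm dRd.
  pose proof (mat_deriv_mmul _ _ _ _ t (mat_deriv_mT _ _ t dRd) dRm) as X. cbv beta in X.
  set (Q := mmul (mT (Rd t)) (Rm t)).
  assert (HQ : SO3 Q) by exact (SO3_mT_mmul _ _ HRd HRm).
  assert (E1 : mmul Q (hat (mvmul (mT Q) (Wd t))) = mmul (hat (Wd t)) Q).
  { rewrite <- (SO3_cof Q HQ) at 2. rewrite <- hat_conj, mmulA, (SO3_mmul_mT Q HQ), mmul1l.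
    reflexivity. }
  replace (mmul Q (hat (eW (Rm t) (W t) (Rd t) (Wd t))))
    with (msub (mmul Q (hat (W t))) (mmul Q (hat (mvmul (mT Q) (Wd t))))).
  - rewrite E1. unfold Q. replace (msub _ _) with
      (madd (mmul (mT (mmul (Rd t) (hat (Wd t)))) (Rm t)) (mmul (mT (Rd t)) (mmul (Rm t) (hat (W t)))))
      by mat_ring. exact X.
  - unfold eW, Q. mat_ring.
Qed.

Lemma control_error_eq (J : mat) kR kW dW w y z E e :
  vadd (mvmul J dW) (cross w (mvmul J w)) =
  vsub (vadd (vadd (vscale (- kR) E) (vscale (- kW) e)) (cross w (mvmul J w)))
       (mvmul J (vsub (cross w y) z)) ->
  mvmul J (vsub dW (vadd (vopp (cross w y)) z)) = vadd (vscale (- kR) E) (vscale (- kW) e).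
Proof.
  destruct J, dW, w, y, z, E, e. mat_unfold. intros H. injection H; intros.
  apply vec_ext; cbn; lra.
Qed.

Lemma eW_dynamics (J : mat) kR kW (Rm Rd : R -> mat) (W Wd : R -> vec) dW dWd t :
  mat_deriv_at Rm t (mmul (Rm t) (hat (W t))) ->
  mat_deriv_at Rd t (mmul (Rd t) (hat (Wd t))) ->
  vec_deriv_at W t dW -> vec_deriv_at Wd t dWd ->
  vadd (mvmul J dW) (cross (W t) (mvmul J (W t))) = control J kR kW (Rm t) (W t) (Rd t) (Wd t) dWd ->
  exists de, vec_deriv_at (fun s => eW (Rm s) (W s) (Rd s) (Wd s)) t de /\
    mvmul J de = vadd (vscale (- kR) (eR (Rm t) (Rd t))) (vscale (- kW) (eW (Rm t) (W t) (Rd t) (Wd t))).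
Proof.
  intros dRm dRd HdW HdWd Hdyn.
  pose proof (vec_deriv_vsub _ _ _ _ t HdW (vec_deriv_mvmul _ _ _ _ t
    (mat_deriv_mmul _ _ _ _ t (mat_deriv_mT _ _ t dRm) dRd) HdWd)) as X.
  eexists. split; [exact X|]. cbv beta.
  replace (mvmul (madd (mmul (mT (mmul (Rm t) (hat (W t)))) (Rd t))
                       (mmul (mT (Rm t)) (mmul (Rd t) (hat (Wd t))))) (Wd t))
    with (vopp (cross (W t) (mvmul (mmul (mT (Rm t)) (Rd t)) (Wd t)))) by mat_ring.
  apply control_error_eq. unfold control in Hdyn. rewrite mvmul_hat in Hdyn. exact Hdyn.
Qed.

Definition eRQ (Q : mat) : vec :=
  vscale (/ (2 * sqrt (1 + trace Q))) (vee (msub Q (mT Q))).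

Lemma eR_eRQ Rm Rd : eR Rm Rd = eRQ (mmul (mT Rd) Rm).
Proof.
  unfold eR, eRQ. f_equal. f_equal. f_equal. rewrite mT_mmul, mTK. reflexivity.
Qed.

(* Closed form of the time derivative of [eRQ Q] when [Q' = Q hat e]. *)
Definition eRQ_rate (Q : mat) (e : vec) : vec :=
  vscale (/ (4 * sqrt (1 + trace Q)))
    (vadd (vscale (1 + trace Q) e) (cross (vee (msub Q (mT Q))) e)).

Lemma eRQ_norm_bounds Q : SO3 Q -> 0 < 1 + trace Q ->
  (2 - sqrt (1 + trace Q)) / 2 <= dot (eRQ Q) (eRQ Q) <= 2 - sqrt (1 + trace Q).
Proof.
  intros HQ Hc. set (s := sqrt (1 + trace Q)).
  assert (Hs : 0 < s) by (apply sqrt_lt_R0; exact Hc).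
  assert (Hss : s * s = 1 + trace Q) by (apply sqrt_sqrt; lra).
  pose proof (SO3_vee_norm Q HQ) as Hq. pose proof (dot_ge0 (vee (msub Q (mT Q)))).
  assert (trace Q <= 3).
  { destruct (Rle_dec (trace Q) 3) as [|Hn]; [assumption|].
    assert ((1 + trace Q) * (3 - trace Q) < 0) by (apply Rmult_pos_neg; lra). lra. }
  assert (s <= 2) by nra.
  unfold eRQ. fold s. rewrite dot_vscale_vscale, Hq.
  replace (trace Q) with (s * s - 1) by lra.
  replace (/ (2 * s) * / (2 * s) * ((1 + (s * s - 1)) * (3 - (s * s - 1))))
    with ((2 - s) * (2 + s) / 4) by (field; lra).
  split; nra.
Qed.

Lemma eRQ_rate_norm Q e : SO3 Q -> 0 < 1 + trace Q ->
  dot (eRQ_rate Q e) (eRQ_rate Q e) <= / 4 * dot e e.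
Proof.
  intros HQ Hc. set (s := sqrt (1 + trace Q)). set (q := vee (msub Q (mT Q))).
  assert (Hs : 0 < s) by (apply sqrt_lt_R0; exact Hc).
  assert (Hss : s * s = 1 + trace Q) by (apply sqrt_sqrt; lra).
  pose proof (SO3_vee_norm Q HQ) as Hqq. fold q in Hqq.
  assert (E : dot (vadd (vscale (1 + trace Q) e) (cross q e)) (vadd (vscale (1 + trace Q) e) (cross q e))
    = (1 + trace Q) * (1 + trace Q) * dot e e + dot q q * dot e e - dot q e * dot q e) by mat_ring.
  unfold eRQ_rate. fold s q. rewrite dot_vscale_vscale, E, Hqq, <- Hss.
  pose proof (dot_ge0 e). pose proof (pow2_ge_0 (dot q e)).
  assert (0 < / (4 * s) * / (4 * s)) by (apply Rmult_lt_0_compat; apply Rinv_0_lt_compat; lra).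
  replace (/ 4 * dot e e) with (/ (4 * s) * / (4 * s) * (4 * (s * s) * dot e e)) by (field; lra).
  apply Rmult_le_compat_l; nra.
Qed.

Lemma vscale_dot_outer a e : vscale (dot a e) a = mvmul (outer a a) e.
Proof. mat_ring. Qed.

Lemma skew_rate_identity Q e :
  vadd (mvmul (msub (madd Q (mT Q)) (mscale (trace Q - 1) mid)) e)
       (vscale 2 (mvmul (msub (mscale (trace Q) mid) (mT Q)) e)) =
  vadd (vscale (1 + trace Q) e) (cross (vee (msub Q (mT Q))) e).
Proof. mat_ring. Qed.

Lemma vec_deriv_ext f t d d' : vec_deriv_at f t d -> d = d' -> vec_deriv_at f t d'.
Proof. intros H ->; exact H. Qed.

Section RelativeAttitude.
Variables (Q : R -> mat) (e : vec) (t : R).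
Hypotheses (Q_SO3 : SO3 (Q t)) (Q_tr : 0 < 1 + trace (Q t))
  (Q_deriv : mat_deriv_at Q t (mmul (Q t) (hat e))).

Lemma sqrt_tr_deriv : derivable_pt_lim (fun s => sqrt (1 + trace (Q s))) t
  (/ (2 * sqrt (1 + trace (Q t))) * (- dot (vee (msub (Q t) (mT (Q t)))) e)).
Proof.
  apply (D_sqrt (fun s => 1 + trace (Q s))); [| exact Q_tr].
  eapply D_ext; [apply D_plus; [apply D_const | exact (D_trace _ _ t Q_deriv)] |].
  rewrite trace_mmul_hat. ring.
Qed.

Lemma Psi_deriv : derivable_pt_lim (fun s => 2 - sqrt (1 + trace (Q s))) t (dot (eRQ (Q t)) e).
Proof.
  eapply D_ext; [exact (D_minus _ _ _ _ _ (D_const 2 t) sqrt_tr_deriv) |].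
  unfold eRQ. rewrite dot_vscalel. ring.
Qed.

Lemma eRQ_deriv : vec_deriv_at (fun s => eRQ (Q s)) t (eRQ_rate (Q t) e).
Proof.
  set (s := sqrt (1 + trace (Q t))). set (q := vee (msub (Q t) (mT (Q t)))).
  assert (Hs : 0 < s) by (apply sqrt_lt_R0; exact Q_tr).
  assert (Hss : s * s = 1 + trace (Q t)) by (apply sqrt_sqrt; lra).
  assert (dinv : derivable_pt_lim (fun u => / (2 * sqrt (1 + trace (Q u)))) t
                   (/ (4 * s * s * s) * dot q e)).
  { eapply D_ext; [apply (D_inv (fun u => 2 * sqrt (1 + trace (Q u))));
      [apply D_scal, sqrt_tr_deriv | fold s; lra] |].
    fold s q. field. lra. }
  pose proof (vec_deriv_vee _ _ t (mat_deriv_msub _ _ _ _ t Q_deriv (mat_deriv_mT _ _ t Q_deriv))) as dq.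
  cbv beta in dq. rewrite vee_skew_mmul_hat in dq.
  pose proof (vec_deriv_vscale _ _ _ _ t dinv dq) as X.
  fold q in X. rewrite vscaleA, vscale_dot_outer, (SO3_vee_outer _ Q_SO3), mvmul_mscale in X.
  unfold eRQ_rate. rewrite <- skew_rate_identity. fold s in X |- *.
  generalize dependent (mvmul (msub (madd (Q t) (mT (Q t))) (mscale (trace (Q t) - 1) mid)) e).
  generalize (mvmul (msub (mscale (trace (Q t)) mid) (mT (Q t))) e).
  intros [u1 u2 u3] [v1 v2 v3] X. eapply vec_deriv_ext; [exact X|].
  rewrite <- Hss. unfold vscale, vadd; cbn. apply vec_ext; cbn; field; lra.
Qed.

End RelativeAttitude.


(** * Lyapunov analysis *)

(* [eps] weights the cross term [eR . J eW] of the second Lyapunov function and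
   [beta] is the decay rate; [M] bounds [|J x|^2 / |x|^2]. *)
Definition admissible_gains (kR kW lmax mu M eps beta : R) : Prop :=
  0 < eps /\ eps <= kR /\ eps * M <= mu / 2 /\ eps * (/ 4 + M + kW * kW / kR) <= kW /\
  0 < beta /\ beta * (lmax / 2 + mu / 4) <= kW / 2 /\ beta * 5 <= eps.

Lemma Rmult_le_of_le_div x y c : 0 < c -> x <= y / c -> x * c <= y.
Proof.
  intros Hc H. apply (Rmult_le_compat_r c) in H; [| lra].
  unfold Rdiv in H. rewrite Rmult_assoc, Rinv_l, Rmult_1_r in H; lra.
Qed.

Lemma admissible_gains_exist kR kW lmax mu M :
  0 < kR -> 0 < kW -> 0 < lmax -> 0 < mu -> 0 <= M ->
  exists eps beta, admissible_gains kR kW lmax mu M eps beta.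
Proof.
  intros HkR HkW Hl Hmu HM.
  assert (HK : 0 <= kW * kW / kR)
    by (unfold Rdiv; apply Rmult_le_pos; [nra | apply Rlt_le, Rinv_0_lt_compat; lra]).
  set (eps := Rmin kR (Rmin (mu / (2 * M + 2)) (kW / (/ 4 + M + kW * kW / kR)))).
  set (beta := Rmin (kW / (2 * (lmax / 2 + mu / 4))) (eps / 5)).
  assert (He1 : eps <= kR) by apply Rmin_l.
  assert (He2 : eps <= mu / (2 * M + 2)) by (eapply Rle_trans; [apply Rmin_r | apply Rmin_l]).
  assert (He3 : eps <= kW / (/ 4 + M + kW * kW / kR)) by (eapply Rle_trans; [apply Rmin_r | apply Rmin_r]).
  assert (Heps : 0 < eps) by (repeat apply Rmin_glb_lt; try lra; apply Rdiv_lt_0_compat; lra).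
  assert (Hb1 : beta <= kW / (2 * (lmax / 2 + mu / 4))) by apply Rmin_l.
  assert (Hb2 : beta <= eps / 5) by apply Rmin_r.
  exists eps, beta. repeat split; try lra.
  - apply Rmult_le_of_le_div in He2; lra.
  - apply Rmult_le_of_le_div in He3; lra.
  - apply Rmin_glb_lt; apply Rdiv_lt_0_compat; lra.
  - apply Rmult_le_of_le_div in Hb1; lra.
Qed.

(* [E = |eW|^2], [A = |eR|^2], [P = Psi], [q = eW . J eW], [DJ = eR' . J eW],
   [c = eR . eW], [cJ = eR . J eW]; the conclusion is [V2' + beta V2 <= 0]. *)
Lemma V2_rate_ineq kR kW lmax mu M eps beta E A P q DJ c cJ :
  0 < kR -> admissible_gains kR kW lmax mu M eps beta ->
  0 <= E -> 0 <= A -> P <= 2 * A -> q <= lmax * E ->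
  2 * DJ <= E / 4 + M * E -> - (2 * kR * kW * c) <= kR * kR * A + kW * kW * E ->
  2 * cJ <= A + M * E ->
  - kW * E + eps * (DJ + (- kR * A - kW * c)) + beta * (/ 2 * q + kR * P + eps * cJ) <= 0.
Proof.
  intros kR_pos gains HE HA HP Hq HDJ Hc HcJ.
  destruct gains as (He1 & He2 & He3 & He4 & Hb1 & Hb2 & Hb3).
  set (K := kW * kW / kR) in *.
  assert (HK : kR * K = kW * kW) by (unfold K; field; lra).
  assert (h1 : eps * DJ <= eps * (E / 8 + M * E / 2)) by (apply Rmult_le_compat_l; lra).
  assert (h2 : eps * (- kW * c) <= eps * (kR / 2 * A + K / 2 * E)).
  { apply Rmult_le_compat_l; [lra|]. apply Rmult_le_reg_l with (2 * kR); [lra|].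
    replace (2 * kR * (kR / 2 * A + K / 2 * E)) with (kR * kR * A + (kR * K) * E) by (field; lra).
    rewrite HK. lra. }
  assert (h3 : beta * (/ 2 * q) <= beta * (lmax / 2 * E)) by (apply Rmult_le_compat_l; lra).
  assert (h4 : beta * (kR * P) <= beta * (2 * kR * A)) by (apply Rmult_le_compat_l; nra).
  assert (h5 : beta * (eps * cJ) <= beta * (eps * (A / 2 + M * E / 2)))
    by (apply Rmult_le_compat_l; [| apply Rmult_le_compat_l]; lra).
  assert (c1 : 0 <= (kW / 2 - eps * (/ 8 + M / 2 + K / 2)) * E) by (apply Rmult_le_pos; lra).
  assert (c2 : 0 <= (kW / 2 - beta * (lmax / 2 + mu / 4)) * E) by (apply Rmult_le_pos; lra).
  assert (c3 : 0 <= beta * (mu / 4 - eps * M / 2) * E) by (apply Rmult_le_pos; nra).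
  assert (c4 : 0 <= (eps * kR / 2 - beta * (2 * kR + eps / 2)) * A) by (apply Rmult_le_pos; nra).
  lra.
Qed.

Lemma V2_lower_ineq kR kW lmax mu M eps beta E A P q cJ :
  admissible_gains kR kW lmax mu M eps beta ->
  0 <= E -> 0 <= A -> A <= P -> mu * E <= q -> - (2 * cJ) <= A + M * E ->
  Rmin (mu / 4) (kR / 2) * (A + E) <= / 2 * q + kR * P + eps * cJ.
Proof.
  intros gains HE HA HP Hq HcJ. destruct gains as (He1 & He2 & He3 & _).
  pose proof (Rmin_l (mu / 4) (kR / 2)). pose proof (Rmin_r (mu / 4) (kR / 2)).
  assert (eps * (- (2 * cJ)) <= eps * (A + M * E)) by (apply Rmult_le_compat_l; lra).
  assert (eps * M * E <= mu / 2 * E) by (apply Rmult_le_compat_r; lra).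
  assert (eps * A <= kR * A) by (apply Rmult_le_compat_r; lra).
  assert (kR * A <= kR * P) by (apply Rmult_le_compat_l; lra).
  nra.
Qed.

Lemma V2_upper_ineq kR kW lmax mu M eps beta E A P q cJ :
  0 < kR -> 0 < lmax -> 0 < mu -> admissible_gains kR kW lmax mu M eps beta ->
  0 <= E -> 0 <= A -> P <= 2 * A -> q <= lmax * E -> 2 * cJ <= A + M * E ->
  / 2 * q + kR * P + eps * cJ <= (lmax / 2 + mu / 4 + 5 * kR / 2) * (A + E).
Proof.
  intros kR_pos lmax_pos mu_pos gains HE HA HP Hq HcJ. destruct gains as (He1 & He2 & He3 & _).
  assert (eps * (2 * cJ) <= eps * (A + M * E)) by (apply Rmult_le_compat_l; lra).
  assert (eps * M * E <= mu / 2 * E) by (apply Rmult_le_compat_r; lra).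
  assert (eps * A <= kR * A) by (apply Rmult_le_compat_r; lra).
  assert (kR * P <= kR * (2 * A)) by (apply Rmult_le_compat_l; lra).
  nra.
Qed.


Section ClosedLoop.
Variables (J : mat) (kR kW : R) (Rd : R -> mat) (Wd dWd : R -> vec) (Rm : R -> mat) (W : R -> vec).
Hypotheses (J_sym : symmetric J) (J_pd : posdef J) (kR_pos : 0 < kR) (kW_pos : 0 < kW)
  (Hcmd : attitude_command Rd Wd dWd) (Hsol : closed_loop_solution J kR kW Rd Wd dWd Rm W).

Definition Qf (s : R) : mat := mmul (mT (Rd s)) (Rm s).
Definition gf (s : R) : R := 1 + trace (Qf s).
Definition ef (s : R) : vec := eW (Rm s) (W s) (Rd s) (Wd s).
Definition eRf (s : R) : vec := eRQ (Qf s).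
Definition V1 (s : R) : R := / 2 * qf J (ef s) + kR * Psi (Rm s) (Rd s).

Lemma Rd_SO3 t : SO3 (Rd t).
Proof. destruct Hcmd as (H & _). apply H. Qed.

Lemma Rd_deriv t : mat_deriv_at Rd t (mmul (Rd t) (hat (Wd t))).
Proof. destruct Hcmd as (_ & H & _). apply H. Qed.

Lemma Rm_deriv t : 0 < t -> mat_deriv_at Rm t (mmul (Rm t) (hat (W t))).
Proof. destruct Hsol as (_ & _ & _ & H & _). apply H. Qed.

Lemma Rm_SO3 t : 0 <= t -> SO3 (Rm t).
Proof. destruct Hsol as (H0 & Hc & _). apply (SO3_flow Rm W H0 Hc Rm_deriv). Qed.

Lemma Qf_SO3 t : 0 <= t -> SO3 (Qf t).
Proof. intros Ht. apply SO3_mT_mmul; [apply Rd_SO3 | apply Rm_SO3, Ht]. Qed.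

Lemma Qf_deriv t : 0 < t -> mat_deriv_at Qf t (mmul (Qf t) (hat (ef t))).
Proof.
  intros Ht. apply rel_attitude_deriv;
    [apply Rm_SO3; lra | apply Rd_SO3 | apply Rm_deriv, Ht | apply Rd_deriv].
Qed.

Lemma ef_deriv t : 0 < t ->
  exists de, vec_deriv_at ef t de /\ mvmul J de = vadd (vscale (- kR) (eRf t)) (vscale (- kW) (ef t)).
Proof.
  intros Ht. destruct Hsol as (_ & _ & _ & _ & Hdyn). destruct Hcmd as (_ & _ & HWd & _).
  destruct (Hdyn t Ht) as [dW [HdW Hdy]].
  destruct (eW_dynamics J kR kW Rm Rd W Wd dW (dWd t) t (Rm_deriv t Ht) (Rd_deriv t) HdW (HWd t) Hdy)
    as [de [Hde HJ]].
  exists de. split; [exact Hde|]. rewrite HJ, eR_eRQ. reflexivity.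
Qed.

Lemma Psi_rate t : 0 < t -> 0 < gf t ->
  derivable_pt_lim (fun s => Psi (Rm s) (Rd s)) t (dot (eRf t) (ef t)).
Proof. intros Ht Hg. apply (Psi_deriv Qf); [exact Hg | apply Qf_deriv, Ht]. Qed.

Lemma eRf_deriv t : 0 < t -> 0 < gf t -> vec_deriv_at eRf t (eRQ_rate (Qf t) (ef t)).
Proof. intros Ht Hg. apply (eRQ_deriv Qf); [apply Qf_SO3; lra | exact Hg | apply Qf_deriv, Ht]. Qed.

Lemma eRf_norm_bounds t : 0 <= t -> 0 < gf t ->
  Psi (Rm t) (Rd t) / 2 <= dot (eRf t) (eRf t) <= Psi (Rm t) (Rd t).
Proof. intros Ht Hg. exact (eRQ_norm_bounds (Qf t) (Qf_SO3 t Ht) Hg). Qed.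

Lemma Qf_rcont0 : mat_rcont0 Qf.
Proof.
  destruct Hsol as (_ & HRm & _).
  exact (mat_rcont0_mmul _ _ (mat_rcont0_mT _ (mat_rcont0_of_deriv _ _ (Rd_deriv 0))) HRm).
Qed.

Lemma gf_rcont0 : rcont0 gf.
Proof. apply rcont0_plus; [apply rcont0_const | apply rcont0_trace, Qf_rcont0]. Qed.

Lemma gf_continuity_pt t : 0 < t -> continuity_pt gf t.
Proof.
  intros Ht. apply (continuity_pt_of_deriv _ _ (0 + trace (mmul (Qf t) (hat (ef t))))).
  apply D_plus; [apply D_const | apply D_trace, Qf_deriv, Ht].
Qed.

Lemma ef_rcont0 : vec_rcont0 ef.
Proof.
  destruct Hsol as (_ & HRm & HW & _). destruct Hcmd as (_ & _ & HWd & _).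
  apply vec_rcont0_vsub; [exact HW|]. apply vec_rcont0_mvmul; [| exact (vec_rcont0_of_deriv _ _ (HWd 0))].
  exact (mat_rcont0_mmul _ _ (mat_rcont0_mT _ HRm) (mat_rcont0_of_deriv _ _ (Rd_deriv 0))).
Qed.

Lemma Psi_rcont0 : 0 < gf 0 -> rcont0 (fun s => Psi (Rm s) (Rd s)).
Proof.
  intros Hg. apply rcont0_minus; [apply rcont0_const | exact (rcont0_sqrt gf gf_rcont0 Hg)].
Qed.

Lemma eRf_rcont0 : 0 < gf 0 -> vec_rcont0 eRf.
Proof.
  intros Hg. apply vec_rcont0_vscale.
  - apply (rcont0_inv (fun s => 2 * sqrt (gf s))).
    + apply rcont0_mult; [apply rcont0_const | exact (rcont0_sqrt gf gf_rcont0 Hg)].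
    + pose proof (sqrt_lt_R0 _ Hg). unfold gf in *. lra.
  - apply vec_rcont0_vee, mat_rcont0_msub; [exact Qf_rcont0 | apply mat_rcont0_mT, Qf_rcont0].
Qed.

Lemma V1_rcont0 : 0 < gf 0 -> rcont0 V1.
Proof.
  intros Hg. apply rcont0_plus; apply rcont0_mult; try apply rcont0_const.
  - apply rcont0_dot; [| apply vec_rcont0_mvmulr]; exact ef_rcont0.
  - exact (Psi_rcont0 Hg).
Qed.

(* The [eR . eW] terms cancel between [eW . J eW' / 2] and [kR Psi']. *)
Lemma V1_deriv t : 0 < t -> 0 < gf t -> derivable_pt_lim V1 t (- kW * dot (ef t) (ef t)).
Proof.
  intros Ht Hg. destruct (ef_deriv t Ht) as [de [Hde HJ]].
  eapply D_ext.
  - apply D_plus; apply D_scal;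
      [exact (D_dot _ _ _ _ t Hde (vec_deriv_mvmulr J _ _ t Hde)) | exact (Psi_rate t Ht Hg)].
  - cbv beta. rewrite (mvmul_sym_dot J de (ef t) J_sym), HJ, (dotC (vadd _ _) (ef t)),
      dot_vadd_vscaler, (dotC (ef t) (eRf t)). field.
Qed.

Lemma V1_nonincreasing : 0 < gf 0 ->
  forall t, 0 <= t -> (forall u, 0 <= u <= t -> 0 < gf u) -> V1 t <= V1 0.
Proof.
  intros Hg0 t Ht Hpos. apply nonincreasing_of_deriv0; [exact Ht | exact (V1_rcont0 Hg0) |].
  intros u Hu. exists (- kW * dot (ef u) (ef u)). split.
  - apply V1_deriv; [lra | apply Hpos; lra].
  - pose proof (dot_ge0 (ef u)). nra.
Qed.

(* [V1] never increases and [kR Psi <= V1], so [Psi] stays below [V1 0 / kR < 2]: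
   [sqrt (gf t)] is bounded below by [2 - V1 0 / kR]. *)
Lemma gf_pos : 0 < gf 0 -> V1 0 < 2 * kR -> forall t, 0 <= t -> 0 < gf t.
Proof.
  intros Hg0 HV.
  set (del := 2 - V1 0 / kR).
  assert (Hdel : 0 < del).
  { unfold del. enough (V1 0 / kR < 2) by lra.
    apply Rmult_lt_reg_r with kR; [lra|]. unfold Rdiv. rewrite Rmult_assoc, Rinv_l; lra. }
  apply (barrier_pos gf (del * del) gf_rcont0 gf_continuity_pt Hg0 ltac:(nra)).
  intros t Ht Hpos.
  pose proof (V1_nonincreasing Hg0 t ltac:(lra) Hpos) as HV1.
  pose proof (qf_ge0_posdef J (ef t) J_pd).
  assert (Hsq : del <= sqrt (gf t)).
  { assert (kR * (2 - sqrt (gf t)) <= V1 0) by (change (V1 t) with (/ 2 * qf J (ef t) + kR * (2 - sqrt (gf t))) in HV1; lra).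
    enough (2 - sqrt (gf t) <= V1 0 / kR) by (unfold del; lra).
    apply Rmult_le_reg_r with kR; [lra|]. unfold Rdiv. rewrite Rmult_assoc, Rinv_l; lra. }
  pose proof (Hpos t ltac:(lra)).
  rewrite <- (sqrt_sqrt (gf t)) by lra. apply Rmult_le_compat; lra.
Qed.

Lemma Psi_lt2 : 0 < gf 0 -> V1 0 < 2 * kR -> forall t, 0 <= t -> Psi (Rm t) (Rd t) < 2.
Proof.
  intros Hg0 HV t Ht. pose proof (gf_pos Hg0 HV t Ht) as Hg.
  change (2 - sqrt (gf t) < 2). pose proof (sqrt_lt_R0 _ Hg). lra.
Qed.

Section Decay.
Variables (lmax mu M eps beta : R).
Hypotheses (lmax_pos : 0 < lmax) (mu_pos : 0 < mu)
  (qf_ge : forall x, mu * dot x x <= qf J x) (qf_le : forall x, qf J x <= lmax * dot x x)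
  (Jx_le : forall x, dot (mvmul J x) (mvmul J x) <= M * dot x x)
  (gains : admissible_gains kR kW lmax mu M eps beta).

Definition V2 (s : R) : R := V1 s + eps * dot (eRf s) (mvmul J (ef s)).

Lemma initial_conditions : Psi (Rm 0) (Rd 0) < 2 ->
  vnorm (ef 0) ^ 2 < 2 * kR / lmax * (2 - Psi (Rm 0) (Rd 0)) -> 0 < gf 0 /\ V1 0 < 2 * kR.
Proof.
  intros HPsi He. rewrite vnorm_sqr in He. split.
  - unfold Psi in HPsi. destruct (Rlt_dec 0 (gf 0)) as [|Hn]; [assumption|].
    unfold gf, Qf in Hn. rewrite sqrt_neg_0 in HPsi by lra. lra.
  - pose proof (qf_le (ef 0)).
    apply (Rmult_lt_compat_l lmax) in He; [| exact lmax_pos].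
    replace (lmax * (2 * kR / lmax * (2 - Psi (Rm 0) (Rd 0)))) with (2 * kR * (2 - Psi (Rm 0) (Rd 0)))
      in He by (field; lra).
    unfold V1. lra.
Qed.

Lemma V2_rcont0 : 0 < gf 0 -> rcont0 V2.
Proof.
  intros Hg. apply rcont0_plus; [exact (V1_rcont0 Hg) |].
  apply rcont0_mult; [apply rcont0_const |].
  apply rcont0_dot; [exact (eRf_rcont0 Hg) | apply vec_rcont0_mvmulr, ef_rcont0].
Qed.

Lemma V2_deriv t : 0 < t -> 0 < gf t ->
  exists d, derivable_pt_lim V2 t d /\ d + beta * V2 t <= 0.
Proof.
  intros Ht Hg. destruct (ef_deriv t Ht) as [de [Hde HJ]].
  eexists. split.
  - apply D_plus; [exact (V1_deriv t Ht Hg) |]. apply D_scal, D_dot;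
      [exact (eRf_deriv t Ht Hg) | exact (vec_deriv_mvmulr J _ _ t Hde)].
  - rewrite HJ, dot_vadd_vscaler.
    pose proof (eRf_norm_bounds t ltac:(lra) Hg) as [HP _].
    pose proof (eRQ_rate_norm (Qf t) (ef t) (Qf_SO3 t ltac:(lra)) Hg) as HdR.
    set (e := ef t) in *. set (r := eRf t) in *. set (dR := eRQ_rate (Qf t) e) in *.
    pose proof (Jx_le e). pose proof (dot_le_half_sum dR (mvmul J e)).
    pose proof (dot_le_half_sum r (mvmul J e)). pose proof (dot_ge_neg_weighted r e kR kW).
    pose proof (V2_rate_ineq kR kW lmax mu M eps beta (dot e e) (dot r r) (Psi (Rm t) (Rd t))
      (qf J e) (dot dR (mvmul J e)) (dot r e) (dot r (mvmul J e)) kR_pos gains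
      (dot_ge0 e) (dot_ge0 r) ltac:(lra) (qf_le e) ltac:(lra) ltac:(lra) ltac:(lra)).
    unfold V2, V1. fold e r. lra.
Qed.

Lemma V2_bounds t : 0 <= t -> 0 < gf t ->
  Rmin (mu / 4) (kR / 2) * (dot (eRf t) (eRf t) + dot (ef t) (ef t)) <= V2 t <=
  (lmax / 2 + mu / 4 + 5 * kR / 2) * (dot (eRf t) (eRf t) + dot (ef t) (ef t)).
Proof.
  intros Ht Hg. pose proof (eRf_norm_bounds t Ht Hg) as [HP1 HP2].
  set (e := ef t). set (r := eRf t) in *.
  pose proof (Jx_le e). pose proof (dot_le_half_sum r (mvmul J e)).
  pose proof (dot_ge_neg_weighted r (mvmul J e) 1 1).
  unfold V2, V1. fold e r. split.
  - apply (V2_lower_ineq kR kW lmax mu M eps beta); try lra; auto using dot_ge0.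
  - apply (V2_upper_ineq kR kW lmax mu M eps beta); try lra; auto using dot_ge0.
Qed.

Lemma V2_exp_decay : 0 < gf 0 -> V1 0 < 2 * kR ->
  forall t, 0 <= t -> V2 t <= V2 0 * exp (- beta * t).
Proof.
  intros Hg0 HV t Ht. pose proof (gf_pos Hg0 HV) as Hg.
  assert (HF : V2 t * exp (beta * t) <= V2 0 * exp (beta * 0)).
  { apply (nonincreasing_of_deriv0 (fun s => V2 s * exp (beta * s))); [exact Ht | |].
    - apply rcont0_mult; [exact (V2_rcont0 Hg0) |].
      apply rcont0_of_continuity_pt, (continuity_pt_of_deriv _ _ (exp (beta * 0) * (beta * 1))).
      apply (D_exp (fun s => beta * s)), D_scal, D_id.
    - intros u Hu. destruct (V2_deriv u ltac:(lra) (Hg u ltac:(lra))) as [d [Hd Hdb]].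
      exists (exp (beta * u) * (d + beta * V2 u)). split.
      + eapply D_ext; [apply D_mult; [exact Hd | apply (D_exp (fun s => beta * s)), D_scal, D_id] | cbv beta; ring].
      + pose proof (exp_pos (beta * u)). nra. }
  rewrite Rmult_0_r, exp_0, Rmult_1_r in HF.
  replace (V2 t) with (V2 t * exp (beta * t) * exp (- beta * t))
    by (rewrite Rmult_assoc, <- exp_plus; replace (beta * t + - beta * t) with 0 by ring;
        rewrite exp_0; ring).
  apply Rmult_le_compat_r; [apply Rlt_le, exp_pos | exact HF].
Qed.

Lemma error_decay : 0 < gf 0 -> V1 0 < 2 * kR -> forall t, 0 <= t ->
  dot (eRf t) (eRf t) + dot (ef t) (ef t) <=
  (lmax / 2 + mu / 4 + 5 * kR / 2) / Rmin (mu / 4) (kR / 2) *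
  (dot (eRf 0) (eRf 0) + dot (ef 0) (ef 0)) * exp (- beta * t).
Proof.
  intros Hg0 HV t Ht.
  pose proof (V2_bounds t Ht (gf_pos Hg0 HV t Ht)) as [HL _].
  pose proof (V2_bounds 0 (Rle_refl 0) Hg0) as [_ HU].
  pose proof (V2_exp_decay Hg0 HV t Ht). pose proof (exp_pos (- beta * t)).
  assert (Hcl : 0 < Rmin (mu / 4) (kR / 2)) by (apply Rmin_glb_lt; lra).
  apply Rmult_le_reg_l with (Rmin (mu / 4) (kR / 2)); [exact Hcl |].
  replace (Rmin (mu / 4) (kR / 2) * ((lmax / 2 + mu / 4 + 5 * kR / 2) / Rmin (mu / 4) (kR / 2) *
    (dot (eRf 0) (eRf 0) + dot (ef 0) (ef 0)) * exp (- beta * t)))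
    with ((lmax / 2 + mu / 4 + 5 * kR / 2) * (dot (eRf 0) (eRf 0) + dot (ef 0) (ef 0)) * exp (- beta * t))
    by (field; lra).
  nra.
Qed.

End Decay.
End ClosedLoop.

Theorem proposition3 (J : mat) (kR kW lmax : R) :
  symmetric J -> posdef J -> is_lambda_max J lmax -> 0 < kR -> 0 < kW ->
  exists C beta : R, 0 < C /\ 0 < beta /\
  forall (Rd : R -> mat) (Wd dWd : R -> vec) (Rm : R -> mat) (W : R -> vec),
    attitude_command Rd Wd dWd ->
    closed_loop_solution J kR kW Rd Wd dWd Rm W ->
    Psi (Rm 0) (Rd 0) < 2 ->
    (vnorm (eW (Rm 0) (W 0) (Rd 0) (Wd 0))) ^ 2
      < 2 * kR / lmax * (2 - Psi (Rm 0) (Rd 0)) ->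
    (forall t, 0 <= t -> Psi (Rm t) (Rd t) < 2) /\
    (forall t, 0 <= t ->
       (vnorm (eR (Rm t) (Rd t))) ^ 2 + (vnorm (eW (Rm t) (W t) (Rd t) (Wd t))) ^ 2
       <= C * ((vnorm (eR (Rm 0) (Rd 0))) ^ 2
               + (vnorm (eW (Rm 0) (W 0) (Rd 0) (Wd 0))) ^ 2) * exp (- beta * t)).
Proof.
  intros Hs Hp Hl HkR HkW.
  destruct (qf_ge_posdef J Hs Hp) as [mu [Hmu Hqf_ge]].
  pose proof (lambda_max_pos J lmax Hp Hl) as Hlmax.
  pose proof (fun x => qf_le_lambda_max J lmax x Hs Hl) as Hqf_le.
  destruct (admissible_gains_exist kR kW lmax mu (frob2 J) HkR HkW Hlmax Hmu (frob2_ge0 J))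
    as (eps & beta & Hgains).
  exists ((lmax / 2 + mu / 4 + 5 * kR / 2) / Rmin (mu / 4) (kR / 2)), beta.
  split; [apply Rdiv_lt_0_compat; [lra | apply Rmin_glb_lt; lra] |].
  split; [destruct Hgains as (_ & _ & _ & _ & Hbeta & _); exact Hbeta |].
  intros Rd Wd dWd Rm W Hcmd Hsol HPsi0 He0.
  destruct (initial_conditions J kR Rd Wd Rm W lmax Hlmax Hqf_le HPsi0 He0) as [Hg0 HV0].
  split.
  - exact (Psi_lt2 J kR kW Rd Wd dWd Rm W Hs Hp HkR HkW Hcmd Hsol Hg0 HV0).
  - intros t Ht. rewrite !vnorm_sqr, !eR_eRQ.
    exact (error_decay J kR kW Rd Wd dWd Rm W Hs Hp HkR HkW Hcmd Hsol lmax mu (frob2 J) eps beta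
      Hlmax Hmu Hqf_ge Hqf_le (mvmul_dot_le J) Hgains Hg0 HV0 t Ht).
Qed.
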